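(* Let $0<q<1$ and $\nu\in\mathbb{R}$. Define, for $z\in\mathbb{C}\setminus(-\infty,0]$ (principal branches of powers), $$I_\nu^{(3)}((1-q^2)z;q^2)=\sum_{k=0}^\infty\frac{q^{k(\nu+k)}(1-q^2)^k(z/2)^{\nu+2k}}{(q^2;q^2)_k\,\Gamma_{q^2}(\nu+k+1)},$$ and, for non-integer $\nu$, $$K_\nu^{(3)}((1-q^2)z;q^2)=\tfrac12 q^{-\nu^2+\nu}\Gamma_{q^2}(\nu)\Gamma_{q^2}(1-\nu)\left[I_{-\nu}^{(3)}((1-q^2)z;q^2)-I_\nu^{(3)}((1-q^2)z;q^2)\right],$$ extended to integer $\nu=n$ by taking the limit $\nu\to n$. Then $$\frac{2}{(1+q)z}\,\partial_q\!\left[z^\nu K_\nu^{(3)}((1-q^2)z;q^2)\right]=-q^{-\frac{\nu-1}{2}}z^{\nu-1}K_{\nu-1}^{(3)}((1-q^2)q^{1/2}z;q^2),$$ $$\frac{2}{(1+q)z}\,\partial_q\!\left[z^{-\nu} K_\nu^{(3)}((1-q^2)z;q^2)\right]=-q^{\frac{\nu+1}{2}}z^{-\nu-1}K_{\nu+1}^{(3)}((1-q^2)q^{1/2}z;q^2).$$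
   Context: $(a;q)_k=\prod_{j=0}^{k-1}(1-aq^j)$, $(a;q)_\infty=\prod_{j\ge0}(1-aq^j)$. The $q$-Gamma function is $\Gamma_{q}(x)=\frac{(q;q)_\infty}{(q^x;q)_\infty}(1-q)^{1-x}$, used here with base $q^2$. The $q$-derivative is $\partial_q f(z)=\frac{f(z)-f(qz)}{(1-q)z}$, applied to the function of $z$ in brackets. *)

From Stdlib Require Import Reals.
From Coquelicot Require Import Coquelicot.
Open Scope R_scope.

Fixpoint qpoch (a q : R) (k : nat) : R :=
  match k with
  | O => 1
  | S k' => qpoch a q k' * (1 - a * q ^ k')
  end.

Definition qpoch_inf (a q : R) : R := Lim_seq (fun k => qpoch a q k).

Definition qGamma (Q x : R) : R :=
  qpoch_inf Q Q / qpoch_inf (Rpower Q x) Q * Rpower (1 - Q) (1 - x).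

Definition slit_plane (z : C) : Prop := ~ (Im z = 0 /\ Re z <= 0).

Definition Carg (z : C) : R := 2 * atan (Im z / (Cmod z + Re z)).

Definition Cpow_pr (z : C) (a : R) : C :=
  (Rpower (Cmod z) a * cos (a * Carg z), Rpower (Cmod z) a * sin (a * Carg z)).

Definition CSeries (u : nat -> C) : C :=
  (Series (fun k => Re (u k)), Series (fun k => Im (u k))).

(* Iq3 q nu z  =  I_nu^(3)((1-q^2) z; q^2) *)
Definition Iq3 (q nu : R) (z : C) : C :=
  CSeries (fun k =>
    Cmult (RtoC (Rpower q (INR k * (nu + INR k)) * (1 - q ^ 2) ^ k
                 / (qpoch (q ^ 2) (q ^ 2) k * qGamma (q ^ 2) (nu + INR k + 1))))
          (Cpow_pr (Cdiv z (RtoC 2)) (nu + 2 * INR k))).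

Definition Kq3_formula (q nu : R) (z : C) : C :=
  Cmult (RtoC (/ 2 * Rpower q (- nu ^ 2 + nu) * qGamma (q ^ 2) nu * qGamma (q ^ 2) (1 - nu)))
        (Cminus (Iq3 q (- nu) z) (Iq3 q nu z)).


(* Kq3 q nu z = K_nu^(3)((1-q^2) z; q^2): the formula for non-integer nu,
   and the (punctured) limit mu -> nu of the formula for integer nu. *)
Definition Kq3 (q nu : R) (z : C) : C :=
  if Req_EM_T nu (IZR (Int_part nu)) then
    (real (Lim (fun mu => Re (Kq3_formula q mu z)) nu),
     real (Lim (fun mu => Im (Kq3_formula q mu z)) nu))
  else Kq3_formula q nu z.

Definition qderiv (q : R) (f : C -> C) (z : C) : C :=
  Cdiv (Cminus (f z) (f (Cmult (RtoC q) z))) (Cmult (RtoC (1 - q)) z).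

(* For non-integer order everything follows termwise from the functional equation
   [Gamma_(q^2)(x + 1) = [x]_(q^2) Gamma_(q^2)(x)]: the q-difference of [z^nu I_nu] and of
   [z^nu I_(-nu)] is [z^nu I_(nu-1)] resp. [z^nu I_(1-nu)] at [q^(1/2) z], and the prefactor of
   [K_nu] changes sign under [nu -> nu - 1].  To handle integer orders, [1 / Gamma_(q^2)] is
   written through Euler's series for [(a;q^2)_oo], an entire function of the order.  At an
   integer [n] the formula for [K_nu] is [0/0] with simple zeros of numerator and denominator
   (as [I_(-n) = I_n]), so [K_n] is a genuine two-sided limit and the identity passes to it.
   The second identity is the first one at [-nu], since [K_(-nu) = K_nu]. *)

From Stdlib Require Import Reals Lra Lia Psatz ZArith Classical.
From Coquelicot Require Import Coquelicot.
Open Scope R_scope.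

(** * q-Pochhammer symbols *)

Lemma pow_le_one x n : 0 <= x <= 1 -> x ^ n <= 1.
Proof. intros Hx. rewrite <- (pow1 n). apply pow_incr. lra. Qed.

Lemma pow_unit_interval x n : 0 <= x <= 1 -> 0 <= x ^ n <= 1.
Proof. intros Hx. split; [apply pow_le; lra | apply pow_le_one; lra]. Qed.

Lemma Rmult_unit_interval x y : 0 <= x <= 1 -> 0 <= y <= 1 -> 0 <= x * y <= 1.
Proof.
  intros Hx Hy. split; [apply Rmult_le_pos; lra|].
  rewrite <- (Rmult_1_r 1). apply Rmult_le_compat; lra.
Qed.

Lemma qpoch_Sl a p k : qpoch a p (S k) = (1 - a) * qpoch (a * p) p k.
Proof. induction k as [|k IH]; [simpl; ring|]. simpl in *. rewrite IH. ring. Qed.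

Lemma real_Rbar_mult (c : R) (l : Rbar) : real (Rbar_mult c l) = c * real l.
Proof.
  destruct l as [l| |]; [simpl; ring| |]; unfold Rbar_mult, Rbar_mult';
  destruct (Rle_dec 0 c) as [H|H]; try destruct (Rle_lt_or_eq_dec 0 c H); simpl; ring.
Qed.

Lemma qpoch_inf_Sl a p : qpoch_inf a p = (1 - a) * qpoch_inf (a * p) p.
Proof.
  unfold qpoch_inf. rewrite <- Lim_seq_incr_1.
  rewrite (Lim_seq_ext _ (fun k => (1 - a) * qpoch (a * p) p k)) by (intro; apply qpoch_Sl).
  rewrite Lim_seq_scal_l. apply real_Rbar_mult.
Qed.

Lemma qpoch_inf_split a p n : qpoch_inf a p = qpoch a p n * qpoch_inf (a * p ^ n) p.
Proof.
  induction n as [|n IH]; cbn [qpoch pow]; [rewrite Rmult_1_r, Rmult_1_l; reflexivity|].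
  rewrite IH, (qpoch_inf_Sl (a * p ^ n)), (Rmult_comm p), !Rmult_assoc. reflexivity.
Qed.

Section QPochhammerBounds.

Variable p : R.
Hypothesis Hp : 0 < p < 1.

Lemma qpoch_bounds b k : 0 <= b <= 1 ->
  0 <= qpoch b p k <= 1 /\ 1 - b * (1 - p ^ k) / (1 - p) <= qpoch b p k.
Proof.
  intros Hb. induction k as [|k [[Hk0 Hk1] Hlow]].
  - simpl. replace (b * (1 - 1) / (1 - p)) with 0 by (field; lra). lra.
  - simpl. pose proof (Rmult_unit_interval b (p ^ k) Hb (pow_unit_interval p k ltac:(lra))).
    replace (b * (1 - p * p ^ k) / (1 - p)) with (b * (1 - p ^ k) / (1 - p) + b * p ^ k)
      by (field; lra).
    nra.
Qed.

Lemma qpoch_pos b k : 0 <= b < 1 -> 0 < qpoch b p k.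
Proof.
  intros Hb. induction k as [|k IH]; simpl; [lra|].
  pose proof (pow_unit_interval p k ltac:(lra)).
  apply Rmult_lt_0_compat; [exact IH|].
  assert (b * p ^ k <= b * 1) by (apply Rmult_le_compat_l; lra). lra.
Qed.

Lemma qpoch_decr b k : 0 <= b <= 1 -> qpoch b p (S k) <= qpoch b p k.
Proof.
  intros Hb. simpl. pose proof (pow_unit_interval p k ltac:(lra)).
  destruct (qpoch_bounds b k Hb) as [Hk _].
  assert (0 <= b * p ^ k) by (apply Rmult_le_pos; lra). nra.
Qed.

Lemma is_lim_seq_qpoch b : 0 <= b <= 1 -> is_lim_seq (qpoch b p) (qpoch_inf b p).
Proof.
  intros Hb.
  assert (Hf : ex_finite_lim_seq (qpoch b p)).
  { apply ex_finite_lim_seq_decr with 0.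
    - intros n. apply qpoch_decr, Hb.
    - intros n. apply (qpoch_bounds b n Hb). }
  exact (Lim_seq_correct' _ Hf).
Qed.

Lemma qpoch_inf_bounds b : 0 <= b <= 1 -> 1 - b / (1 - p) <= qpoch_inf b p <= 1.
Proof.
  intros Hb. pose proof (is_lim_seq_qpoch b Hb) as Hl. split.
  - change (Rbar_le (1 - b / (1 - p)) (qpoch_inf b p)).
    apply (is_lim_seq_le (fun _ => 1 - b / (1 - p)) (qpoch b p)); auto.
    2: apply is_lim_seq_const.
    intros n. eapply Rle_trans; [|apply (qpoch_bounds b n Hb)].
    pose proof (pow_unit_interval p n ltac:(lra)).
    apply Rplus_le_compat_l, Ropp_le_contravar.
    unfold Rdiv. apply Rmult_le_compat_r; [apply Rlt_le, Rinv_0_lt_compat; lra | nra].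
  - change (Rbar_le (qpoch_inf b p) 1).
    apply (is_lim_seq_le (qpoch b p) (fun _ => 1)); auto.
    2: apply is_lim_seq_const.
    intros n. apply (qpoch_bounds b n Hb).
Qed.

Lemma qpoch_inf_le_qpoch b k : 0 <= b <= 1 -> qpoch_inf b p <= qpoch b p k.
Proof.
  intros Hb. apply (is_lim_seq_decr_compare _ _ (is_lim_seq_qpoch b Hb)).
  intros n. apply qpoch_decr, Hb.
Qed.

(* Split off a finite product; the remaining tail [(p^(N+1);p)_oo] is close to 1. *)
Lemma qpoch_inf_self_pos : 0 < qpoch_inf p p.
Proof.
  destruct (pow_lt_1_zero p ltac:(rewrite Rabs_pos_eq; lra) (1 - p) ltac:(lra)) as [N HN].
  specialize (HN N (le_n N)). rewrite Rabs_pos_eq in HN by (apply pow_le; lra).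
  rewrite (qpoch_inf_split p p N).
  pose proof (pow_unit_interval p N ltac:(lra)).
  assert (Hb : 0 <= p * p ^ N <= 1) by nra.
  pose proof (qpoch_inf_bounds _ Hb) as [Hlow _].
  assert (p * p ^ N / (1 - p) < 1)
    by (apply Rmult_lt_reg_r with (1 - p); [lra|]; field_simplify; nra).
  apply Rmult_lt_0_compat; [apply qpoch_pos; lra | lra].
Qed.

End QPochhammerBounds.

(** * Euler's series for the infinite product *)

(* [euler_coef p k = (-1)^k p^(k(k-1)/2) / (p;p)_k]: Euler's expansion of [(a;p)_oo] in [a]. *)
Fixpoint euler_coef (p : R) (k : nat) : R :=
  match k with
  | O => 1
  | S k' => euler_coef p k' * (- p ^ k' / (1 - p ^ S k'))
  end.

Definition euler_series (p a : R) : R := PSeries (euler_coef p) a.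

Section EulerSeries.

Variable p : R.
Hypothesis Hp : 0 < p < 1.

Lemma pow_S_lt_1 k : 0 < p ^ S k < 1.
Proof. split; [apply pow_lt; lra | apply pow_lt_1_compat; [lra | lia]]. Qed.

Lemma euler_coef_neq0 k : euler_coef p k <> 0.
Proof.
  induction k as [|k IH]; simpl; [lra|].
  pose proof (pow_S_lt_1 k). pose proof (pow_lt p k ltac:(lra)). simpl in *.
  apply Rmult_integral_contrapositive_currified; [exact IH|].
  apply Rmult_integral_contrapositive_currified; [lra | apply Rinv_neq_0_compat; lra].
Qed.

Lemma CV_radius_euler_coef : CV_radius (euler_coef p) = p_infty.
Proof.
  apply CV_radius_infinite_DAlembert; [apply euler_coef_neq0|].
  assert (Hgeom : is_lim_seq (fun n => p ^ n) 0)
    by (apply is_lim_seq_geom; rewrite Rabs_pos_eq; lra).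
  assert (Hden : is_lim_seq (fun n => 1 - p * p ^ n) (1 - p * 0))
    by (apply is_lim_seq_minus'; [apply is_lim_seq_const|];
        apply is_lim_seq_mult'; [apply is_lim_seq_const | exact Hgeom]).
  pose proof (is_lim_seq_div' _ _ _ _ Hgeom Hden ltac:(lra)) as Hratio.
  replace (0 / (1 - p * 0)) with 0 in Hratio by (field; lra).
  eapply is_lim_seq_ext; [|exact Hratio]. intros n. simpl.
  pose proof (euler_coef_neq0 n). pose proof (pow_S_lt_1 n). pose proof (pow_lt p n ltac:(lra)).
  simpl in *.
  replace (euler_coef p n * (- p ^ n / (1 - p * p ^ n)) / euler_coef p n)
    with (- (p ^ n / (1 - p * p ^ n))) by (field; lra).
  rewrite Rabs_Ropp, Rabs_pos_eq; [reflexivity | apply Rlt_le, Rdiv_lt_0_compat; lra].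
Qed.

Lemma ex_series_euler x : ex_series (fun k => euler_coef p k * x ^ k).
Proof.
  apply ex_series_Rabs, CV_disk_inside. rewrite CV_radius_euler_coef. exact I.
Qed.

Lemma euler_series_Sl a : euler_series p a = (1 - a) * euler_series p (a * p).
Proof.
  unfold euler_series, PSeries.
  enough (Series (fun k => euler_coef p k * a ^ k) - Series (fun k => euler_coef p k * (a * p) ^ k)
          = - a * Series (fun k => euler_coef p k * (a * p) ^ k)) by lra.
  rewrite <- Series_minus by apply ex_series_euler.
  rewrite Series_incr_1
    by (apply (ex_series_minus (V := R_NormedModule)); apply ex_series_euler).
  rewrite <- Series_scal_l. simpl. rewrite Rminus_diag, Rplus_0_l.
  apply Series_ext. intros n. simpl. pose proof (pow_S_lt_1 n). simpl in *.
  rewrite Rpow_mult_distr. field. lra.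
Qed.

Lemma continuity_pt_euler_series a : continuity_pt (euler_series p) a.
Proof.
  apply continuity_pt_filterlim, (ex_derive_continuous (V := R_NormedModule)).
  apply ex_derive_PSeries. rewrite CV_radius_euler_coef. exact I.
Qed.

Lemma euler_series_0 : euler_series p 0 = 1.
Proof. apply PSeries_0. Qed.

Lemma qpoch_inf_minus_euler_split a n :
  qpoch_inf a p - euler_series p a
  = qpoch a p n * (qpoch_inf (a * p ^ n) p - euler_series p (a * p ^ n)).
Proof.
  induction n as [|n IH]; cbn [qpoch pow]; [rewrite !Rmult_1_r; ring|].
  rewrite IH, (qpoch_inf_Sl (a * p ^ n)), (euler_series_Sl (a * p ^ n)).
  replace (a * (p * p ^ n)) with (a * p ^ n * p) by ring. ring.
Qed.

(* [D = (.;p)_oo - E] satisfies [|D b| <= |D (b p^N)|] on [[0, 1]], and [D] is continuous at [0]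
   with [D 0 = 0]. *)
Lemma qpoch_inf_euler_unit b : 0 <= b <= 1 -> qpoch_inf b p = euler_series p b.
Proof.
  intros Hb.
  set (D := fun x => qpoch_inf x p - euler_series p x).
  assert (Hpow : is_lim_seq (fun n => b * p ^ n) 0).
  { replace (Finite 0) with (Rbar_mult b 0) by (simpl; f_equal; ring).
    apply is_lim_seq_scal_l, is_lim_seq_geom. rewrite Rabs_pos_eq; lra. }
  assert (Hunit : forall n, 0 <= b * p ^ n <= 1)
    by (intros n; apply Rmult_unit_interval, pow_unit_interval; lra).
  assert (HP : is_lim_seq (fun n => qpoch_inf (b * p ^ n) p) 1).
  { apply is_lim_seq_le_le with (fun n => 1 - b * p ^ n / (1 - p)) (fun _ => 1).
    - intros n. apply (qpoch_inf_bounds p Hp), Hunit.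
    - replace (Finite 1) with (Finite (1 - 0 / (1 - p))) by (f_equal; field; lra).
      apply is_lim_seq_minus'; [apply is_lim_seq_const|].
      apply is_lim_seq_div'; [exact Hpow | apply is_lim_seq_const | lra].
    - apply is_lim_seq_const. }
  assert (HE : is_lim_seq (fun n => euler_series p (b * p ^ n)) 1).
  { rewrite <- euler_series_0.
    apply is_lim_seq_continuous; [apply continuity_pt_euler_series | exact Hpow]. }
  pose proof (is_lim_seq_abs _ _ (is_lim_seq_minus' _ _ _ _ HP HE)) as HD.
  simpl in HD. rewrite Rminus_diag, Rabs_R0 in HD.
  assert (Hle : Rbar_le (Rabs (D b)) 0).
  { apply (is_lim_seq_le (fun _ => Rabs (D b)) _ _ _) with (2 := is_lim_seq_const _) (3 := HD).
    intros n. unfold D. rewrite (qpoch_inf_minus_euler_split b n), Rabs_mult.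
    rewrite <- (Rmult_1_l (Rabs (_ - _))) at 2.
    apply Rmult_le_compat_r; [apply Rabs_pos|].
    rewrite Rabs_pos_eq; apply (qpoch_bounds p Hp); lra. }
  pose proof (Rabs_pos (D b)). simpl in Hle.
  assert (D b = 0) by (apply Rabs_eq_0; lra). unfold D in *. lra.
Qed.

Lemma qpoch_inf_euler a : 0 <= a -> qpoch_inf a p = euler_series p a.
Proof.
  intros Ha.
  destruct (pow_lt_1_zero p ltac:(rewrite Rabs_pos_eq; lra) (/ (a + 1))
              ltac:(apply Rinv_0_lt_compat; lra)) as [N HN].
  specialize (HN N (le_n N)). rewrite Rabs_pos_eq in HN by (apply pow_le; lra).
  assert (Hsmall : 0 <= a * p ^ N <= 1).
  { pose proof (pow_le p N ltac:(lra)). split; [apply Rmult_le_pos; lra|].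
    apply Rmult_lt_compat_l with (r := a + 1) in HN; [|lra].
    rewrite Rinv_r in HN by lra. nra. }
  enough (qpoch_inf a p - euler_series p a = 0) by lra.
  rewrite (qpoch_inf_minus_euler_split a N), qpoch_inf_euler_unit by exact Hsmall. ring.
Qed.

End EulerSeries.

(** * The reciprocal q-Gamma function *)

Lemma Rabs_PSeries_le (c : nat -> R) a a1 : CV_radius c = p_infty -> 0 <= a <= a1 ->
  Rabs (PSeries c a) <= Series (fun k => Rabs (c k * a1 ^ k)).
Proof.
  intros Hc Ha. unfold PSeries.
  assert (Hex : forall x, ex_series (fun k => Rabs (c k * x ^ k)))
    by (intros x; apply CV_disk_inside; rewrite Hc; exact I).
  eapply Rle_trans; [apply Series_Rabs, Hex|].
  apply Series_le; [|apply Hex]. intros n. split; [apply Rabs_pos|].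
  rewrite !Rabs_mult. apply Rmult_le_compat_l; [apply Rabs_pos|].
  rewrite !Rabs_pos_eq by (apply pow_le; lra). apply pow_incr; lra.
Qed.

Lemma exp_le_mono x y : x <= y -> exp x <= exp y.
Proof. intros [H|H]; [left; apply exp_increasing, H | right; subst; reflexivity]. Qed.

Lemma Rpower_pos a x : 0 < a -> 0 < Rpower a x.
Proof. intros. apply exp_pos. Qed.

Lemma ln_lt_0 a : 0 < a < 1 -> ln a < 0.
Proof. intros. rewrite <- ln_1. apply ln_increasing; lra. Qed.

Lemma Rle_Rpower_lt_1 a x y : 0 < a < 1 -> y <= x -> Rpower a x <= Rpower a y.
Proof. intros Ha Hxy. unfold Rpower. apply exp_le_mono. pose proof (ln_lt_0 a Ha). nra. Qed.

(* [1 / Gamma_p(x)] through Euler's series: smooth in [x] and [0] at the poles of [Gamma_p]. *)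
Definition qrgamma (p x : R) : R :=
  euler_series p (Rpower p x) * Rpower (1 - p) (x - 1) / qpoch_inf p p.

Definition euler_series_deriv (p a : R) : R := PSeries (PS_derive (euler_coef p)) a.

Definition qrgamma_deriv (p x : R) : R :=
  (Rpower p x * ln p * euler_series_deriv p (Rpower p x) * Rpower (1 - p) (x - 1)
   + euler_series p (Rpower p x) * (Rpower (1 - p) (x - 1) * ln (1 - p))) / qpoch_inf p p.

Definition qnum (p x : R) : R := (1 - Rpower p x) / (1 - p).

Definition qnum_deriv (p x : R) : R := - (Rpower p x * ln p) / (1 - p).

Section ReciprocalQGamma.

Variable p : R.
Hypothesis Hp : 0 < p < 1.

Let A_pos : 0 < qpoch_inf p p := qpoch_inf_self_pos p Hp.

Lemma qGamma_qrgamma x : qGamma p x = / qrgamma p x.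
Proof.
  unfold qGamma, qrgamma.
  rewrite (qpoch_inf_euler p Hp (Rpower p x)) by (apply Rlt_le, Rpower_pos; lra).
  replace (x - 1) with (- (1 - x)) by ring. rewrite Rpower_Ropp.
  unfold Rdiv. rewrite !Rinv_mult, !Rinv_inv. ring.
Qed.

Lemma qrgamma_S x : qrgamma p x = qnum p x * qrgamma p (x + 1).
Proof.
  unfold qrgamma, qnum. rewrite (euler_series_Sl p Hp), Rpower_plus, Rpower_1 by lra.
  replace (x + 1 - 1) with x by ring.
  replace (x - 1) with (x + - (1)) by ring.
  rewrite Rpower_plus, Rpower_Ropp, Rpower_1 by lra.
  field. lra.
Qed.

Lemma qrgamma_1 : qrgamma p 1 = 1.
Proof.
  unfold qrgamma. rewrite Rpower_1, <- (qpoch_inf_euler p Hp), Rminus_diag, Rpower_O by lra.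
  field. lra.
Qed.

Lemma qrgamma_nonpos_int m : qrgamma p (- INR m) = 0.
Proof.
  induction m as [|m IH]; rewrite qrgamma_S.
  - unfold qnum. cbn [INR]. rewrite Ropp_0, Rpower_O by lra. unfold Rdiv. ring.
  - rewrite S_INR. replace (- (INR m + 1) + 1) with (- INR m) by ring. rewrite IH. ring.
Qed.

Lemma qrgamma_pos_int_neq0 m : qrgamma p (INR m + 1) <> 0.
Proof.
  induction m as [|m IH]; [rewrite Rplus_0_l, qrgamma_1; lra|].
  intros H. apply IH. rewrite qrgamma_S, <- S_INR, H. ring.
Qed.

Lemma is_derive_euler_series a : is_derive (euler_series p) a (euler_series_deriv p a).
Proof.
  apply is_derive_PSeries. rewrite (CV_radius_euler_coef p Hp). exact I.
Qed.

Lemma is_derive_qrgamma x : is_derive (qrgamma p) x (qrgamma_deriv p x).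
Proof.
  unfold qrgamma, qrgamma_deriv, Rpower. auto_derive.
  - eexists. apply is_derive_euler_series.
  - rewrite (is_derive_unique _ _ _ (is_derive_euler_series _)).
    match goal with |- ?a = ?b => change (@eq R a b) end. unfold Rminus. field. lra.
Qed.

Lemma qrgamma_deriv_S x :
  qrgamma_deriv p x = qnum_deriv p x * qrgamma p (x + 1) + qnum p x * qrgamma_deriv p (x + 1).
Proof.
  assert (H : is_derive (fun y => qnum p y * qrgamma p (y + 1)) x
                (qnum_deriv p x * qrgamma p (x + 1) + qnum p x * qrgamma_deriv p (x + 1))).
  { unfold qnum, qnum_deriv, Rpower. auto_derive.
    - eexists. apply is_derive_qrgamma.
    - rewrite (is_derive_unique _ _ _ (is_derive_qrgamma _)). field. lra. }
  apply (is_derive_ext _ (qrgamma p)) in H; [|intros; symmetry; apply qrgamma_S].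
  rewrite <- (is_derive_unique _ _ _ H). symmetry. apply is_derive_unique, is_derive_qrgamma.
Qed.

Lemma qrgamma_deriv_nonpos_int_neq0 m : qrgamma_deriv p (- INR m) <> 0.
Proof.
  pose proof (ln_lt_0 p Hp).
  induction m as [|m IH]; rewrite qrgamma_deriv_S.
  - cbn [INR]. rewrite Ropp_0, Rplus_0_l, qrgamma_1.
    unfold qnum, qnum_deriv. rewrite Rpower_O by lra.
    replace (- (1 * ln p) / (1 - p) * 1 + (1 - 1) / (1 - p) * qrgamma_deriv p 1)
      with (- ln p / (1 - p)) by (field; lra).
    apply Rgt_not_eq, Rdiv_lt_0_compat; lra.
  - rewrite S_INR. replace (- (INR m + 1) + 1) with (- INR m) by ring.
    rewrite qrgamma_nonpos_int, Rmult_0_r, Rplus_0_l.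
    apply Rmult_integral_contrapositive_currified; [|exact IH].
    assert (1 < Rpower p (- (INR m + 1))).
    { unfold Rpower. rewrite <- exp_0 at 1. apply exp_increasing. pose proof (pos_INR m).
      replace (- (INR m + 1) * ln p) with ((INR m + 1) * - ln p) by ring.
      apply Rmult_lt_0_compat; lra. }
    unfold qnum, Rdiv. apply Rmult_integral_contrapositive_currified; [lra|].
    apply Rinv_neq_0_compat. lra.
Qed.

Lemma qrgamma_bounded x0 : exists C, forall x, x0 <= x ->
  Rabs (qrgamma p x) <= C /\ Rabs (qrgamma_deriv p x) <= C.
Proof.
  set (a1 := Rpower p x0). set (P0 := Rpower (1 - p) (x0 - 1)). set (A := qpoch_inf p p).
  set (S0 := Series (fun k => Rabs (euler_coef p k * a1 ^ k))).
  set (S1 := Series (fun k => Rabs (PS_derive (euler_coef p) k * a1 ^ k))).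
  assert (HE : forall a, 0 <= a <= a1 ->
            Rabs (euler_series p a) <= S0 /\ Rabs (euler_series_deriv p a) <= S1).
  { intros a Ha. split; apply Rabs_PSeries_le; auto.
    - apply (CV_radius_euler_coef p Hp).
    - rewrite CV_radius_derive. apply (CV_radius_euler_coef p Hp). }
  pose proof (ln_lt_0 p Hp). pose proof (ln_lt_0 (1 - p) ltac:(lra)).
  exists (Rmax (S0 * P0 / A) ((a1 * - ln p * S1 * P0 + S0 * P0 * - ln (1 - p)) / A)).
  intros x Hx.
  assert (Ha : 0 < Rpower p x <= a1) by (split; [apply Rpower_pos | apply Rle_Rpower_lt_1]; lra).
  assert (HP : 0 < Rpower (1 - p) (x - 1) <= P0)
    by (split; [apply Rpower_pos | apply Rle_Rpower_lt_1]; lra).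
  destruct (HE (Rpower p x) ltac:(lra)) as [HE0 HE1].
  pose proof (Rabs_pos (euler_series p (Rpower p x))).
  pose proof (Rabs_pos (euler_series_deriv p (Rpower p x))).
  unfold qrgamma, qrgamma_deriv. fold A. unfold Rdiv.
  rewrite !Rabs_mult, (Rabs_pos_eq (/ A)) by (apply Rlt_le, Rinv_0_lt_compat, A_pos).
  assert (0 < / A) by (apply Rinv_0_lt_compat, A_pos).
  split; [eapply Rle_trans; [|apply Rmax_l] | eapply Rle_trans; [|apply Rmax_r]];
    apply Rmult_le_compat_r; try lra.
  - rewrite (Rabs_pos_eq (Rpower _ _)) by lra. apply Rmult_le_compat; lra.
  - eapply Rle_trans; [apply Rabs_triang|]. rewrite !Rabs_mult.
    rewrite (Rabs_pos_eq (Rpower p x)), (Rabs_pos_eq (Rpower (1 - p) _)) by lra.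
    rewrite (Rabs_left (ln p)), (Rabs_left (ln (1 - p))) by lra.
    assert (0 <= Rpower p x * - ln p) by (apply Rmult_le_pos; lra).
    apply Rplus_le_compat.
    + apply Rmult_le_compat; [apply Rmult_le_pos; lra | lra | | lra].
      apply Rmult_le_compat; [lra | lra | | lra].
      apply Rmult_le_compat; lra.
    + rewrite <- Rmult_assoc. apply Rmult_le_compat; [apply Rmult_le_pos; lra | lra | | lra].
      apply Rmult_le_compat; lra.
Qed.

End ReciprocalQGamma.

(** * Limits of series depending on a parameter *)

Lemma ex_series_dominated (a M : nat -> R) :
  (forall k, Rabs (a k) <= M k) -> ex_series M -> ex_series a.
Proof. intros Ha HM. exact (ex_series_le (V := R_CompleteNormedModule) a M Ha HM). Qed.

Lemma Rabs_Series_dominated (a M : nat -> R) :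
  (forall k, Rabs (a k) <= M k) -> ex_series M -> Rabs (Series a) <= Series M.
Proof.
  intros Ha HM. eapply Rle_trans; [apply Series_Rabs|].
  - apply (ex_series_dominated _ M); [intros k; rewrite Rabs_Rabsolu; apply Ha | exact HM].
  - apply Series_le; [intros k; split; [apply Rabs_pos | apply Ha] | exact HM].
Qed.

Lemma is_lim_seq_sum_f_R0 (u : nat -> nat -> R) (v : nat -> R) n :
  (forall k, is_lim_seq (fun j => u j k) (v k)) ->
  is_lim_seq (fun j => sum_f_R0 (u j) n) (sum_f_R0 v n).
Proof.
  intros H. induction n as [|n IH]; simpl; [apply H|].
  exact (is_lim_seq_plus' _ _ _ _ IH (H (S n))).
Qed.

Lemma Series_tail_lt (M : nat -> R) eps : ex_series M -> 0 < eps ->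
  exists K0, Series (fun k => M (S K0 + k)%nat) < eps.
Proof.
  intros HM Heps.
  destruct (proj1 (is_series_Reals M (Series M)) (Series_correct _ HM) eps Heps) as [K0 HK0].
  exists K0. specialize (HK0 K0 (le_n _)). unfold Rdist in HK0.
  rewrite (Series_incr_n M (S K0)) in HK0; [|lia | exact HM].
  apply Rabs_def2 in HK0. simpl pred in HK0. lra.
Qed.

Lemma is_lim_seq_Series_dominated (d : nat -> nat -> R) (l M : nat -> R) (N : nat) :
  (forall k, is_lim_seq (fun j => d j k) (l k)) ->
  (forall j k, (N <= j)%nat -> Rabs (d j k) <= M k) ->
  ex_series M ->
  is_lim_seq (fun j => Series (d j)) (Series l).
Proof.
  intros Hlim Hdom HM.
  assert (Hl : forall k, Rabs (l k) <= M k).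
  { intros k. change (Rbar_le (Rabs (l k)) (M k)).
    apply (is_lim_seq_le_loc (fun j => Rabs (d j k)) (fun _ => M k)).
    - exists N. intros j Hj. apply Hdom, Hj.
    - apply (is_lim_seq_abs _ (l k)), Hlim.
    - apply is_lim_seq_const. }
  assert (Hdiff : forall j k, (N <= j)%nat -> Rabs (d j k - l k) <= 2 * M k).
  { intros j k Hj. eapply Rle_trans; [apply Rabs_triang|]. rewrite Rabs_Ropp.
    pose proof (Hdom j k Hj). pose proof (Hl k). lra. }
  apply is_lim_seq_spec. intros eps.
  destruct (Series_tail_lt M (eps / 4) HM ltac:(pose proof (cond_pos eps); lra)) as [K0 Htail].
  set (K := S K0) in Htail.
  assert (HMK : ex_series (fun k => M (K + k)%nat))
    by exact (proj1 (ex_series_incr_n (V := R_NormedModule) M K) HM).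
  assert (Hdl : forall k, is_lim_seq (fun j => d j k - l k) 0).
  { intros k. replace (Finite 0) with (Finite (l k - l k)) by (f_equal; ring).
    apply is_lim_seq_minus'; [apply Hlim | apply is_lim_seq_const]. }
  pose proof (is_lim_seq_sum_f_R0 _ _ K0 Hdl) as Hhead. rewrite sum_cte, Rmult_0_l in Hhead.
  destruct (proj2 (is_lim_seq_spec _ _) Hhead (pos_div_2 eps)) as [J HJ].
  exists (Nat.max N J). intros j Hj. specialize (HJ j ltac:(lia)). simpl in HJ.
  rewrite Rminus_0_r in HJ.
  assert (Hexd : ex_series (d j))
    by (apply (ex_series_dominated _ M); [intros; apply Hdom; lia | exact HM]).
  assert (Hexl : ex_series l) by (apply (ex_series_dominated _ M); [exact Hl | exact HM]).
  rewrite <- Series_minus by assumption.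
  rewrite (Series_incr_n _ K);
    [|unfold K; lia | apply (ex_series_minus (V := R_NormedModule)); assumption].
  change (Init.Nat.pred K) with K0.
  assert (Hrest : Rabs (Series (fun k => d j (K + k)%nat - l (K + k)%nat))
                  <= 2 * Series (fun k => M (K + k)%nat)).
  { rewrite <- Series_scal_l. apply Rabs_Series_dominated.
    - intros k. apply Hdiff. lia.
    - exact (ex_series_scal_l (V := R_NormedModule) 2 _ HMK). }
  eapply Rle_lt_trans; [apply Rabs_triang|]. lra.
Qed.

Lemma is_lim_seq_difference_quotient f x l (e : nat -> R) :
  is_derive f x l -> is_lim_seq e 0 -> (forall j, e j <> 0) ->
  is_lim_seq (fun j => (f (x + e j) - f x) / e j) l.
Proof.
  intros Hf He Hne. apply is_derive_Reals in Hf. apply is_lim_seq_Reals in He.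
  apply is_lim_seq_Reals. intros eps Heps.
  destruct (Hf eps Heps) as [delta Hdelta]. destruct (He delta (cond_pos delta)) as [N HN].
  exists N. intros n Hn. apply Hdelta; [apply Hne|].
  specialize (HN n Hn). unfold Rdist in HN. rewrite Rminus_0_r in HN. exact HN.
Qed.

Lemma Rabs_increment_le f f' a M h :
  (forall m, a - 1 <= m <= a + 1 -> is_derive f m (f' m)) ->
  (forall m, a - 1 <= m <= a + 1 -> Rabs (f' m) <= M) ->
  Rabs h <= 1 -> Rabs (f (a + h) - f a) <= M * Rabs h.
Proof.
  intros Hd Hb Hh. apply Rabs_le_between in Hh.
  assert (Hin : forall m, Rmin a (a + h) <= m <= Rmax a (a + h) -> a - 1 <= m <= a + 1).
  { intros m. unfold Rmin, Rmax. destruct (Rle_dec a (a + h)); lra. }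
  destruct (MVT_gen f a (a + h) f') as [c [Hc ->]].
  - intros m Hm. apply Hd, Hin. lra.
  - intros m Hm. apply continuity_pt_filterlim, (ex_derive_continuous (V := R_NormedModule)).
    eexists. apply Hd, Hin, Hm.
  - replace (a + h - a) with h by ring. rewrite Rabs_mult.
    apply Rmult_le_compat_r; [apply Rabs_pos | apply Hb, Hin, Hc].
Qed.

Lemma is_lim_seq_Series_difference_quotient (f f' : nat -> R -> R) (M : nat -> R) m0
    (e : nat -> R) :
  (forall k m, m0 - 1 <= m <= m0 + 1 -> is_derive (f k) m (f' k m)) ->
  (forall k m, m0 - 1 <= m <= m0 + 1 -> Rabs (f k m) <= M k /\ Rabs (f' k m) <= M k) ->
  ex_series M -> is_lim_seq e 0 -> (forall j, e j <> 0) ->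
  is_lim_seq (fun j => (Series (fun k => f k (m0 + e j)) - Series (fun k => f k m0)) / e j)
             (Series (fun k => f' k m0)).
Proof.
  intros Hd Hb HM He Hne.
  destruct (proj2 (is_lim_seq_spec _ _) He (mkposreal 1 Rlt_0_1)) as [N HN].
  assert (HeN : forall j, (N <= j)%nat -> Rabs (e j) <= 1).
  { intros j Hj. specialize (HN j Hj). simpl in HN. rewrite Rminus_0_r in HN. lra. }
  assert (Hex : forall m, m0 - 1 <= m <= m0 + 1 -> ex_series (fun k => f k m))
    by (intros m Hm; apply (ex_series_dominated _ M); [intros k; apply Hb, Hm | exact HM]).
  apply is_lim_seq_ext_loc with (fun j => Series (fun k => (f k (m0 + e j) - f k m0) / e j)).
  - exists N. intros j Hj. pose proof (proj1 (Rabs_le_between _ _) (HeN j Hj)).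
    unfold Rdiv. rewrite Series_scal_r, Series_minus; [reflexivity | apply Hex; lra ..].
  - apply (is_lim_seq_Series_dominated _ _ M N); [|intros j k Hj| exact HM].
    + intros k. apply is_lim_seq_difference_quotient; [apply Hd; lra | exact He | exact Hne].
    + pose proof (Rabs_pos_lt _ (Hne j)).
      pose proof (Rabs_increment_le (f k) (f' k) m0 (M k) (e j) (Hd k)
                    (fun m Hm => proj2 (Hb k m Hm)) (HeN j Hj)).
      unfold Rdiv. rewrite Rabs_mult, Rabs_inv.
      apply (Rmult_le_reg_r (Rabs (e j))); [lra|].
      rewrite Rmult_assoc, Rinv_l by lra. lra.
Qed.

(** * Complex series and principal powers *)

Lemma C_ext (a b : C) : Re a = Re b -> Im a = Im b -> a = b.
Proof. destruct a, b. unfold Re, Im. simpl. intros -> ->. reflexivity. Qed.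

Ltac Ceq := apply C_ext; unfold Re, Im, Cminus, Cplus, Copp, Cmult, RtoC; cbn [fst snd]; ring.

Lemma Cdiv_2 w : Cdiv w (RtoC 2) = Cmult (RtoC (/ 2)) w.
Proof. apply C_ext; unfold Re, Im, Cdiv, Cinv, Cmult; simpl; field. Qed.

Lemma RtoC_neq0 r : r <> 0 -> RtoC r <> RtoC 0.
Proof. intros H H0. apply H. exact (f_equal fst H0). Qed.

Definition ex_CSeries (u : nat -> C) : Prop :=
  ex_series (fun k => Re (u k)) /\ ex_series (fun k => Im (u k)).

Lemma CSeries_ext u v : (forall k, u k = v k) -> CSeries u = CSeries v.
Proof. intros H. unfold CSeries. f_equal; apply Series_ext; intros; rewrite H; reflexivity. Qed.

Lemma ex_CSeries_scal_l c u : ex_CSeries u -> ex_CSeries (fun k => Cmult c (u k)).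
Proof.
  intros [H1 H2]. split; simpl.
  - apply (ex_series_minus (V := R_NormedModule));
      apply (ex_series_scal_l (V := R_NormedModule)); assumption.
  - apply (ex_series_plus (V := R_NormedModule));
      apply (ex_series_scal_l (V := R_NormedModule)); assumption.
Qed.

Lemma ex_CSeries_minus u v :
  ex_CSeries u -> ex_CSeries v -> ex_CSeries (fun k => Cminus (u k) (v k)).
Proof.
  intros [H1 H2] [H3 H4].
  split; simpl; apply (ex_series_minus (V := R_NormedModule)); assumption.
Qed.

Lemma CSeries_scal_l c u : ex_CSeries u -> CSeries (fun k => Cmult c (u k)) = Cmult c (CSeries u).
Proof.
  intros [H1 H2]. unfold CSeries. apply C_ext; unfold Re, Im; simpl.
  - rewrite Series_minus by (apply (ex_series_scal_l (V := R_NormedModule)); assumption).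
    rewrite !Series_scal_l. reflexivity.
  - rewrite Series_plus by (apply (ex_series_scal_l (V := R_NormedModule)); assumption).
    rewrite !Series_scal_l. reflexivity.
Qed.

Lemma CSeries_minus u v : ex_CSeries u -> ex_CSeries v ->
  CSeries (fun k => Cminus (u k) (v k)) = Cminus (CSeries u) (CSeries v).
Proof.
  intros [H1 H2] [H3 H4]. unfold CSeries. apply C_ext; unfold Re, Im in *; simpl.
  - rewrite (Series_ext _ (fun k => fst (u k) - fst (v k))) by (intros; simpl; ring).
    rewrite Series_minus by assumption. ring.
  - rewrite (Series_ext _ (fun k => snd (u k) - snd (v k))) by (intros; simpl; ring).
    rewrite Series_minus by assumption. ring.
Qed.

Lemma CSeries_incr_1 u : ex_CSeries u -> CSeries u = Cplus (u 0%nat) (CSeries (fun k => u (S k))).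
Proof.
  intros [H1 H2]. unfold CSeries.
  apply C_ext; unfold Re, Im; simpl; rewrite Series_incr_1 by assumption; reflexivity.
Qed.

Lemma slit_plane_pos z : slit_plane z -> 0 < Cmod z + Re z /\ 0 < Cmod z.
Proof.
  intros Hz. destruct z as [x y]. unfold slit_plane, Cmod, Re, Im in *; cbn [fst snd] in *.
  assert (Hx : Rabs x <= sqrt (x ^ 2 + y ^ 2)).
  { rewrite <- sqrt_Rsqr_abs. apply sqrt_le_1_alt. unfold Rsqr. nra. }
  destruct (Req_dec y 0) as [->|Hy].
  - assert (0 < x) by (apply Rnot_le_lt; intros Hx0; apply Hz; split; auto).
    rewrite Rabs_pos_eq in Hx; lra.
  - assert (Hlt : Rabs x < sqrt (x ^ 2 + y ^ 2)).
    { rewrite <- sqrt_Rsqr_abs. apply sqrt_lt_1_alt. split; [apply Rle_0_sqr|].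
      unfold Rsqr. assert (0 < y * y) by (apply Rsqr_pos_lt; auto). nra. }
    pose proof (Rabs_pos x). split; [|lra].
    destruct (Rle_lt_dec 0 x); [rewrite Rabs_pos_eq in Hlt | rewrite Rabs_left in Hlt]; lra.
Qed.

Lemma slit_plane_neq0 z : slit_plane z -> z <> 0%C.
Proof. intros Hz H0. destruct (slit_plane_pos z Hz) as [_ H]. rewrite H0, Cmod_0 in H. lra. Qed.

Lemma slit_plane_scal r w : 0 < r -> slit_plane w -> slit_plane (Cmult (RtoC r) w).
Proof.
  intros Hr Hw. destruct w as [x y]. unfold slit_plane, Re, Im in *; simpl in *.
  intros [H1 H2]. apply Hw. split; nra.
Qed.

Lemma cos_sin_2atan t :
  cos (2 * atan t) = (1 - t ^ 2) / (1 + t ^ 2) /\ sin (2 * atan t) = 2 * t / (1 + t ^ 2).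
Proof.
  rewrite cos_2a_cos, sin_2a, cos_atan, sin_atan.
  assert (H0 : 0 < 1 + t²) by (pose proof (Rle_0_sqr t); lra).
  pose proof (sqrt_sqrt (1 + t²) ltac:(lra)) as Hs.
  pose proof (sqrt_lt_R0 (1 + t²) H0).
  unfold Rsqr in *. split.
  - replace (2 * (1 / sqrt (1 + t * t)) * (1 / sqrt (1 + t * t)) - 1)
      with (2 / (sqrt (1 + t * t) * sqrt (1 + t * t)) - 1) by (field; lra).
    rewrite Hs. field. lra.
  - replace (2 * (t / sqrt (1 + t * t)) * (1 / sqrt (1 + t * t)))
      with (2 * t / (sqrt (1 + t * t) * sqrt (1 + t * t))) by (field; lra).
    rewrite Hs. field. lra.
Qed.

Lemma Carg_cos_sin z : slit_plane z ->
  Cmod z * cos (Carg z) = Re z /\ Cmod z * sin (Carg z) = Im z.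
Proof.
  intros Hz. destruct (slit_plane_pos z Hz) as [Hs Hr].
  unfold Carg. destruct (cos_sin_2atan (Im z / (Cmod z + Re z))) as [-> ->].
  assert (Hr2 : Cmod z * Cmod z = Re z * Re z + Im z * Im z).
  { unfold Cmod. rewrite sqrt_sqrt; [unfold Re, Im; ring|].
    apply Rplus_le_le_0_compat; apply pow2_ge_0. }
  set (x := Re z) in *. set (y := Im z) in *. set (r := Cmod z) in *. set (s := r + x) in *.
  replace ((y / s) ^ 2) with (y ^ 2 / s ^ 2) by (field; lra).
  assert (Hy : y ^ 2 = 2 * r * s - s ^ 2) by (unfold s; nra).
  rewrite Hy. replace x with (s - r) by (unfold s; ring).
  split; field; repeat split; intro; nra.
Qed.

Lemma Cpow_pr_plus_1 w a : slit_plane w -> Cpow_pr w (a + 1) = Cmult w (Cpow_pr w a).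
Proof.
  intros Hw. destruct (Carg_cos_sin w Hw) as [Hc Hs]. destruct (slit_plane_pos w Hw) as [_ Hr].
  unfold Cpow_pr. rewrite Rpower_plus, Rpower_1 by lra.
  replace ((a + 1) * Carg w) with (a * Carg w + Carg w) by ring.
  rewrite cos_plus, sin_plus. apply C_ext; unfold Re, Im in *; simpl; rewrite <- Hc, <- Hs; ring.
Qed.

Lemma Cpow_pr_scal r w a : 0 < r -> slit_plane w ->
  Cpow_pr (Cmult (RtoC r) w) a = Cmult (RtoC (Rpower r a)) (Cpow_pr w a).
Proof.
  intros Hr0 Hw. destruct (slit_plane_pos w Hw) as [Hs Hr].
  assert (Hm : Cmod (Cmult (RtoC r) w) = r * Cmod w)
    by (rewrite Cmod_mult, Cmod_R, Rabs_pos_eq; lra).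
  assert (Ha : Carg (Cmult (RtoC r) w) = Carg w).
  { unfold Carg. rewrite Hm. do 2 f_equal. destruct w as [x y]. unfold Re, Im in *; simpl in *.
    assert (0 < r * (Cmod (x, y) + x)) by (apply Rmult_lt_0_compat; lra).
    field. split; [nra | lra]. }
  unfold Cpow_pr. rewrite Hm, Ha, <- Rpower_mult_distr by lra.
  apply C_ext; unfold Re, Im; simpl; ring.
Qed.

(** * The series defining the q-Bessel function [I] *)

Lemma exp_mult_INR x n : exp (INR n * x) = exp x ^ n.
Proof.
  rewrite <- Rpower_pow by apply exp_pos. unfold Rpower. rewrite ln_exp, Rmult_comm. reflexivity.
Qed.

Lemma ex_series_gaussian (l a : R) : l < 0 ->
  ex_series (fun k => (INR k + 1) * exp (l * INR k ^ 2 + a * INR k)).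
Proof.
  intros Hl. set (u := fun k => (INR k + 1) * exp (l * INR k ^ 2 + a * INR k)).
  assert (Hu : forall k, 0 < u k)
    by (intros k; apply Rmult_lt_0_compat; [pose proof (pos_INR k); lra | apply exp_pos]).
  apply ex_series_Rabs, (ex_series_DAlembert _ 0); [lra | intros k; apply Rgt_not_eq, Hu |].
  assert (Hratio : forall n, u (S n) / u n
                   = (INR n + 2) / (INR n + 1) * (exp (l + a) * exp (2 * l) ^ n)).
  { intros n. unfold u. rewrite <- exp_mult_INR, <- exp_plus, S_INR.
    pose proof (pos_INR n). pose proof (exp_pos (l * INR n ^ 2 + a * INR n)).
    replace (l * (INR n + 1) ^ 2 + a * (INR n + 1))
      with ((l * INR n ^ 2 + a * INR n) + (l + a + INR n * (2 * l))) by ring.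
    rewrite exp_plus. field. lra. }
  apply is_lim_seq_le_le with (fun _ => 0) (fun n => 2 * exp (l + a) * exp (2 * l) ^ n).
  - intros n. rewrite Rabs_pos_eq by (apply Rlt_le, Rdiv_lt_0_compat; apply Hu).
    split; [apply Rlt_le, Rdiv_lt_0_compat; apply Hu|]. rewrite Hratio.
    pose proof (pos_INR n). pose proof (exp_pos (l + a)).
    pose proof (pow_lt (exp (2 * l)) n (exp_pos _)).
    rewrite Rmult_assoc. apply Rmult_le_compat_r; [nra|].
    apply Rmult_le_reg_r with (INR n + 1); [lra|]. field_simplify; lra.
  - apply is_lim_seq_const.
  - replace (Finite 0) with (Finite (2 * exp (l + a) * 0)) by (f_equal; ring).
    apply is_lim_seq_mult'; [apply is_lim_seq_const|].
    apply is_lim_seq_geom. rewrite Rabs_pos_eq by (apply Rlt_le, exp_pos).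
    rewrite <- exp_0. apply exp_increasing. lra.
Qed.

Definition Iq3_coef (q mu : R) (k : nat) : R :=
  Rpower q (INR k * (mu + INR k)) * (1 - q ^ 2) ^ k
  / (qpoch (q ^ 2) (q ^ 2) k * qGamma (q ^ 2) (mu + INR k + 1)).

Definition Iq3_term (q mu : R) (w : C) (k : nat) : C :=
  Cmult (RtoC (Iq3_coef q mu k)) (Cpow_pr (Cdiv w (RtoC 2)) (mu + 2 * INR k)).

Lemma Iq3_CSeries q mu w : Iq3 q mu w = CSeries (Iq3_term q mu w).
Proof. reflexivity. Qed.

Definition qfact_ratio (q : R) (k : nat) : R := (1 - q ^ 2) ^ k / qpoch (q ^ 2) (q ^ 2) k.

Definition trig (b : bool) (x : R) : R := if b then cos x else sin x.

Definition trig_deriv (b : bool) (x : R) : R := if b then - sin x else cos x.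

(* [q^(k(mu+k)) (w/2)^(mu+2k)] in modulus-argument form: real part for [b = true], imaginary part
   for [b = false]. *)
Definition Iq3_phase (b : bool) (q : R) (w : C) (k : nat) (mu : R) : R :=
  exp (INR k * (mu + INR k) * ln q + (mu + 2 * INR k) * ln (Cmod (Cdiv w (RtoC 2))))
  * trig b ((mu + 2 * INR k) * Carg (Cdiv w (RtoC 2))).

Definition Iq3_phase_deriv (b : bool) (q : R) (w : C) (k : nat) (mu : R) : R :=
  exp (INR k * (mu + INR k) * ln q + (mu + 2 * INR k) * ln (Cmod (Cdiv w (RtoC 2))))
  * ((INR k * ln q + ln (Cmod (Cdiv w (RtoC 2))))
       * trig b ((mu + 2 * INR k) * Carg (Cdiv w (RtoC 2)))
     + Carg (Cdiv w (RtoC 2)) * trig_deriv b ((mu + 2 * INR k) * Carg (Cdiv w (RtoC 2)))).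

Definition Iq3_part (b : bool) (q : R) (w : C) (k : nat) (mu : R) : R :=
  qfact_ratio q k * (qrgamma (q ^ 2) (mu + INR k + 1) * Iq3_phase b q w k mu).

Definition Iq3_part_deriv (b : bool) (q : R) (w : C) (k : nat) (mu : R) : R :=
  qfact_ratio q k * (qrgamma_deriv (q ^ 2) (mu + INR k + 1) * Iq3_phase b q w k mu
                     + qrgamma (q ^ 2) (mu + INR k + 1) * Iq3_phase_deriv b q w k mu).

Section Iq3Series.

Variable q : R.
Hypothesis Hq : 0 < q < 1.

Lemma pow2_open_unit : 0 < q ^ 2 < 1.
Proof. split; nra. Qed.

Lemma Iq3_coef_qrgamma mu k :
  Iq3_coef q mu k
  = Rpower q (INR k * (mu + INR k)) * qfact_ratio q k * qrgamma (q ^ 2) (mu + INR k + 1).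
Proof.
  unfold Iq3_coef, qfact_ratio. rewrite (qGamma_qrgamma _ pow2_open_unit).
  unfold Rdiv. rewrite Rinv_mult, Rinv_inv. ring.
Qed.

Lemma Iq3_term_parts mu w k :
  Re (Iq3_term q mu w k) = Iq3_part true q w k mu /\
  Im (Iq3_term q mu w k) = Iq3_part false q w k mu.
Proof.
  unfold Iq3_term, Iq3_part, Iq3_phase, Cpow_pr, trig. rewrite Iq3_coef_qrgamma.
  unfold Rpower. rewrite exp_plus. unfold Re, Im, Cmult, RtoC. cbn [fst snd].
  split; match goal with |- ?a = ?b => change (@eq R a b) end; ring.
Qed.

Lemma is_derive_Iq3_part b w k mu : is_derive (Iq3_part b q w k) mu (Iq3_part_deriv b q w k mu).
Proof.
  unfold Iq3_part, Iq3_part_deriv, Iq3_phase, Iq3_phase_deriv.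
  pose proof pow2_open_unit as Hp. remember (q ^ 2) as p.
  destruct b; unfold trig, trig_deriv; auto_derive;
    try (eexists; apply (is_derive_qrgamma _ Hp));
    rewrite (is_derive_unique _ _ _ (is_derive_qrgamma _ Hp _));
    match goal with |- ?a = ?b => change (@eq R a b) end; ring.
Qed.

Lemma trig_bounds b x : Rabs (trig b x) <= 1 /\ Rabs (trig_deriv b x) <= 1.
Proof.
  destruct b; unfold trig, trig_deriv; split; try rewrite Rabs_Ropp; apply Rabs_le;
    first [apply COS_bound | apply SIN_bound].
Qed.

Lemma qfact_ratio_bounds k : 0 <= qfact_ratio q k <= / qpoch_inf (q ^ 2) (q ^ 2).
Proof.
  pose proof pow2_open_unit.
  pose proof (qpoch_inf_self_pos _ pow2_open_unit).
  pose proof (qpoch_inf_le_qpoch _ pow2_open_unit (q ^ 2) k ltac:(lra)).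
  pose proof (pow_unit_interval (1 - q ^ 2) k ltac:(lra)).
  unfold qfact_ratio, Rdiv. split.
  - apply Rmult_le_pos; [lra | apply Rlt_le, Rinv_0_lt_compat; lra].
  - rewrite <- (Rmult_1_l (/ qpoch_inf _ _)). apply Rmult_le_compat; try lra.
    + apply Rlt_le, Rinv_0_lt_compat; lra.
    + apply Rinv_le_contravar; lra.
Qed.

Variable w : C.

Let lr : R := ln (Cmod (Cdiv w (RtoC 2))).
Let th : R := Carg (Cdiv w (RtoC 2)).

Lemma Iq3_phase_bounds b k m0 m : m0 - 1 <= m <= m0 + 1 ->
  let E := exp (ln q * INR k ^ 2 + ((m0 - 1) * ln q + 2 * lr) * INR k + (m0 * lr + Rabs lr)) in
  Rabs (Iq3_phase b q w k m) <= E /\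
  Rabs (Iq3_phase_deriv b q w k m) <= (INR k + 1) * (1 + Rabs (ln q) + Rabs lr + Rabs th) * E.
Proof.
  intros Hm E. pose proof (ln_lt_0 q Hq). pose proof (pos_INR k).
  set (L := INR k * (m + INR k) * ln q + (m + 2 * INR k) * lr).
  assert (HE : exp L <= E).
  { apply exp_le_mono. unfold L.
    assert (0 <= INR k * (m - (m0 - 1))) by (apply Rmult_le_pos; lra).
    assert ((m - m0) * lr <= Rabs lr).
    { destruct (Rle_dec 0 lr); [rewrite Rabs_pos_eq | rewrite Rabs_left]; nra. }
    nra. }
  pose proof (exp_pos L). destruct (trig_bounds b ((m + 2 * INR k) * th)) as [Ht Ht'].
  unfold Iq3_phase, Iq3_phase_deriv. fold lr th L.
  rewrite !Rabs_mult, (Rabs_pos_eq (exp L)) by lra. split.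
  - rewrite <- (Rmult_1_r E). apply Rmult_le_compat; try lra. apply Rabs_pos.
  - assert (Hfac : Rabs ((INR k * ln q + lr) * trig b ((m + 2 * INR k) * th)
                         + th * trig_deriv b ((m + 2 * INR k) * th))
                   <= (INR k + 1) * (1 + Rabs (ln q) + Rabs lr + Rabs th)).
    { eapply Rle_trans; [apply Rabs_triang|]. rewrite !Rabs_mult.
      pose proof (Rabs_triang (INR k * ln q) lr) as Htri.
      rewrite Rabs_mult, (Rabs_pos_eq (INR k)) in Htri by lra.
      pose proof (Rabs_pos (ln q)). pose proof (Rabs_pos lr). pose proof (Rabs_pos th).
      assert (Rabs (INR k * ln q + lr) * Rabs (trig b ((m + 2 * INR k) * th))
              <= INR k * Rabs (ln q) + Rabs lr).
      { rewrite <- Rmult_1_r. apply Rmult_le_compat; try apply Rabs_pos; lra. }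
      assert (Rabs th * Rabs (trig_deriv b ((m + 2 * INR k) * th)) <= Rabs th).
      { rewrite <- (Rmult_1_r (Rabs th)) at 2. apply Rmult_le_compat_l; lra. }
      assert (0 <= INR k * (Rabs lr + Rabs th)) by (apply Rmult_le_pos; lra).
      nra. }
    rewrite (Rmult_comm _ E). apply Rmult_le_compat; try lra; apply Rabs_pos.
Qed.

Lemma Iq3_part_bounds m0 : exists M : nat -> R, ex_series M /\
  forall b k m, m0 - 1 <= m <= m0 + 1 ->
    Rabs (Iq3_part b q w k m) <= M k /\ Rabs (Iq3_part_deriv b q w k m) <= M k.
Proof.
  destruct (qrgamma_bounded _ pow2_open_unit m0) as [R0 HR0].
  assert (HR0pos : 0 <= R0) by (eapply Rle_trans; [apply Rabs_pos | apply (HR0 m0 (Rle_refl _))]).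
  set (D := / qpoch_inf (q ^ 2) (q ^ 2)).
  set (c1 := 1 + Rabs (ln q) + Rabs lr + Rabs th).
  set (a := (m0 - 1) * ln q + 2 * lr). set (c0 := m0 * lr + Rabs lr).
  set (E := fun k => exp (ln q * INR k ^ 2 + a * INR k + c0)).
  assert (Hc1 : 1 <= c1) by (unfold c1; pose proof (Rabs_pos (ln q));
                              pose proof (Rabs_pos lr); pose proof (Rabs_pos th); lra).
  exists (fun k => 2 * ((INR k + 1) * c1) * (D * R0 * E k)). split.
  - apply ex_series_ext with
      (fun k => 2 * c1 * D * R0 * exp c0 * ((INR k + 1) * exp (ln q * INR k ^ 2 + a * INR k))).
    + intros k. unfold E. rewrite (exp_plus (ln q * INR k ^ 2 + a * INR k) c0).
      match goal with |- ?x = ?y => change (@eq R x y) end. ring.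
    + apply (ex_series_scal_l (V := R_NormedModule)), ex_series_gaussian, ln_lt_0, Hq.
  - intros b k m Hm.
    destruct (Iq3_phase_bounds b k m0 m Hm) as [Hph Hph']. fold a c0 c1 in Hph, Hph'.
    change (exp (ln q * INR k ^ 2 + a * INR k + c0)) with (E k) in Hph, Hph'.
    destruct (HR0 (m + INR k + 1) ltac:(pose proof (pos_INR k); lra)) as [Hg Hg'].
    destruct (qfact_ratio_bounds k) as [Hf0 Hf1]. fold D in Hf1.
    assert (HX : 1 <= (INR k + 1) * c1) by (pose proof (pos_INR k); nra).
    assert (0 <= D * R0 * E k)
      by (apply Rmult_le_pos; [apply Rmult_le_pos|apply Rlt_le, exp_pos]; lra).
    unfold Iq3_part, Iq3_part_deriv. rewrite !Rabs_mult, (Rabs_pos_eq (qfact_ratio q k)) by lra.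
    split.
    + apply Rle_trans with (D * R0 * E k); [|nra].
      rewrite Rmult_assoc. apply Rmult_le_compat; try lra.
      * apply Rmult_le_pos; apply Rabs_pos.
      * apply Rmult_le_compat; try apply Rabs_pos; lra.
    + apply Rle_trans with (D * (R0 * E k + R0 * ((INR k + 1) * c1 * E k))); [|nra].
      apply Rmult_le_compat; try lra; [apply Rabs_pos|].
      eapply Rle_trans; [apply Rabs_triang|]. rewrite !Rabs_mult.
      apply Rplus_le_compat; apply Rmult_le_compat; try apply Rabs_pos; lra.
Qed.

Lemma ex_CSeries_Iq3_term mu : ex_CSeries (Iq3_term q mu w).
Proof.
  destruct (Iq3_part_bounds mu) as [M [HM Hb]].
  split; [apply (ex_series_ext (fun k => Iq3_part true q w k mu))
         | apply (ex_series_ext (fun k => Iq3_part false q w k mu))];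
    try (intros k; symmetry; apply Iq3_term_parts);
    (apply (ex_series_dominated _ M); [intros k; apply (Hb _ k mu); lra | exact HM]).
Qed.

Lemma Iq3_parts mu :
  Re (Iq3 q mu w) = Series (fun k => Iq3_part true q w k mu) /\
  Im (Iq3 q mu w) = Series (fun k => Iq3_part false q w k mu).
Proof.
  rewrite Iq3_CSeries. unfold CSeries, Re, Im. cbn [fst snd].
  split; apply Series_ext; intros k; apply Iq3_term_parts.
Qed.

Lemma is_lim_seq_Iq3_part_difference_quotient b m0 (e : nat -> R) :
  is_lim_seq e 0 -> (forall j, e j <> 0) ->
  is_lim_seq (fun j => (Series (fun k => Iq3_part b q w k (m0 + e j))
                        - Series (fun k => Iq3_part b q w k m0)) / e j)
             (Series (fun k => Iq3_part_deriv b q w k m0)).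
Proof.
  intros He Hne. destruct (Iq3_part_bounds m0) as [M [HM Hb]].
  apply (is_lim_seq_Series_difference_quotient _ _ M); auto.
  intros k m _. apply is_derive_Iq3_part.
Qed.

End Iq3Series.

(** * q-difference relations at non-integer order *)

Lemma Rpower_sq q x : 0 < q -> Rpower (q ^ 2) x = Rpower q (2 * x).
Proof. intros Hq. unfold Rpower. rewrite ln_pow by exact Hq. f_equal. simpl. ring. Qed.

Lemma Rpower_sqrt q y : 0 < q -> Rpower (sqrt q) y = Rpower q (y / 2).
Proof.
  intros Hq. unfold Rpower. f_equal.
  pose proof (sqrt_lt_R0 q Hq) as Hs.
  assert (Hln : ln (sqrt q * sqrt q) = ln q) by (rewrite sqrt_sqrt; lra).
  rewrite ln_mult in Hln by exact Hs.
  replace (ln (sqrt q)) with (ln q / 2) by lra. field.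
Qed.

Definition qdiff_factor (q mu : R) : R := (1 - q ^ 2) * Rpower q ((1 - mu) / 2).

Section QDifference.

Variable q : R.
Hypothesis Hq : 0 < q < 1.

Let Hsq : 0 < q ^ 2 < 1 := pow2_open_unit q Hq.
Let Hsqrt : 0 < sqrt q := sqrt_lt_R0 q (proj1 Hq).

(* [Gamma(mu + k + 1) = [mu + k] Gamma(mu + k)] lowers the order of the k-th coefficient. *)
Lemma Iq3_coef_qdiff mu k :
  Iq3_coef q mu k - Rpower q mu * Iq3_coef q mu k * Rpower q (mu + 2 * INR k)
  = qdiff_factor q mu * (Rpower (sqrt q) (mu - 1 + 2 * INR k) * Iq3_coef q (mu - 1) k).
Proof.
  unfold qdiff_factor. rewrite !(Iq3_coef_qrgamma q Hq).
  replace (mu - 1 + INR k + 1) with (mu + INR k) by ring.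
  rewrite (qrgamma_S _ Hsq (mu + INR k)). unfold qnum.
  rewrite Rpower_sq, Rpower_sqrt by lra.
  assert (Hk : Rpower q ((1 - mu) / 2) * Rpower q ((mu - 1 + 2 * INR k) / 2)
               * Rpower q (INR k * (mu - 1 + INR k)) = Rpower q (INR k * (mu + INR k)))
    by (rewrite <- !Rpower_plus; f_equal; field).
  assert (Hm : Rpower q mu * Rpower q (mu + 2 * INR k) = Rpower q (2 * (mu + INR k)))
    by (rewrite <- Rpower_plus; f_equal; ring).
  rewrite <- Hk, <- Hm. field. lra.
Qed.

Lemma Iq3_coef_opp_qdiff mu k :
  Iq3_coef q (- mu) (S k) - Rpower q mu * Iq3_coef q (- mu) (S k) * Rpower q (- mu + 2 * INR (S k))
  = qdiff_factor q mu * (Rpower (sqrt q) (1 - mu + 2 * INR k) * Iq3_coef q (1 - mu) k).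
Proof.
  unfold qdiff_factor. rewrite !(Iq3_coef_qrgamma q Hq).
  replace (- mu + INR (S k) + 1) with (1 - mu + INR k + 1) by (rewrite S_INR; ring).
  rewrite Rpower_sqrt by lra.
  assert (Hm : Rpower q mu * Rpower q (- mu + 2 * INR (S k)) = q ^ 2 * (q ^ 2) ^ k).
  { rewrite <- Rpower_plus. replace (mu + (- mu + 2 * INR (S k))) with (2 * INR (S k)) by ring.
    rewrite <- Rpower_sq, Rpower_pow by lra. reflexivity. }
  assert (Hk : Rpower q ((1 - mu) / 2) * Rpower q ((1 - mu + 2 * INR k) / 2)
               * Rpower q (INR k * (1 - mu + INR k)) = Rpower q (INR (S k) * (- mu + INR (S k))))
    by (rewrite <- !Rpower_plus; f_equal; rewrite S_INR; field).
  unfold qfact_ratio. cbn [qpoch pow].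
  pose proof (qpoch_pos _ Hsq (q ^ 2) k ltac:(lra)).
  pose proof (pow_S_lt_1 _ Hsq k). cbn [pow] in *.
  rewrite Rmult_assoc, <- Hm, <- Hk. field. split; lra.
Qed.

Lemma Iq3_term_scal mu r w k : 0 < r -> slit_plane w ->
  Iq3_term q mu (Cmult (RtoC r) w) k = Cmult (RtoC (Rpower r (mu + 2 * INR k))) (Iq3_term q mu w k).
Proof.
  intros Hr Hw. unfold Iq3_term. rewrite !Cdiv_2.
  replace (Cmult (RtoC (/ 2)) (Cmult (RtoC r) w))
    with (Cmult (RtoC r) (Cmult (RtoC (/ 2)) w)) by Ceq.
  rewrite Cpow_pr_scal by (exact Hr || (apply slit_plane_scal; [lra | exact Hw])). Ceq.
Qed.

Lemma Iq3_term_lower mu w k : slit_plane w ->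
  Iq3_term q mu w k = Cmult (Cdiv w (RtoC 2))
    (Cmult (RtoC (Iq3_coef q mu k)) (Cpow_pr (Cdiv w (RtoC 2)) (mu - 1 + 2 * INR k))).
Proof.
  intros Hw. unfold Iq3_term. replace (mu + 2 * INR k) with (mu - 1 + 2 * INR k + 1) by ring.
  rewrite Cpow_pr_plus_1 by (rewrite Cdiv_2; apply slit_plane_scal; [lra | exact Hw]). Ceq.
Qed.

Lemma Iq3_term_qdiff mu w k : slit_plane w ->
  Cminus (Cmult (Cpow_pr w mu) (Iq3_term q mu w k))
         (Cmult (Cpow_pr (Cmult (RtoC q) w) mu) (Iq3_term q mu (Cmult (RtoC q) w) k))
  = Cmult (RtoC (qdiff_factor q mu)) (Cmult (Cdiv w (RtoC 2))
      (Cmult (Cpow_pr w mu) (Iq3_term q (mu - 1) (Cmult (RtoC (sqrt q)) w) k))).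
Proof.
  intros Hw.
  rewrite Cpow_pr_scal, !Iq3_term_scal, (Iq3_term_lower mu w k Hw)
    by (lra || exact Hw || exact Hsqrt).
  unfold Iq3_term.
  set (P := Cpow_pr w mu). set (X := Cpow_pr (Cdiv w (RtoC 2)) (mu - 1 + 2 * INR k)).
  transitivity (Cmult (RtoC (Iq3_coef q mu k
                             - Rpower q mu * Iq3_coef q mu k * Rpower q (mu + 2 * INR k)))
                      (Cmult (Cdiv w (RtoC 2)) (Cmult P X))); [Ceq|].
  rewrite Iq3_coef_qdiff. Ceq.
Qed.

Lemma Iq3_term_opp_qdiff_0 mu w : slit_plane w ->
  Cminus (Cmult (Cpow_pr w mu) (Iq3_term q (- mu) w 0))
         (Cmult (Cpow_pr (Cmult (RtoC q) w) mu) (Iq3_term q (- mu) (Cmult (RtoC q) w) 0)) = RtoC 0.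
Proof.
  intros Hw. rewrite Cpow_pr_scal, Iq3_term_scal by (lra || exact Hw).
  assert (H1 : Rpower q mu * Rpower q (- mu + 2 * INR 0) = 1).
  { rewrite <- Rpower_plus. cbn [INR]. replace (mu + (- mu + 2 * 0)) with 0 by ring.
    apply Rpower_O. lra. }
  transitivity (Cmult (RtoC (1 - Rpower q mu * Rpower q (- mu + 2 * INR 0)))
                      (Cmult (Cpow_pr w mu) (Iq3_term q (- mu) w 0))); [Ceq|].
  rewrite H1. Ceq.
Qed.

Lemma Iq3_term_opp_qdiff_S mu w k : slit_plane w ->
  Cminus (Cmult (Cpow_pr w mu) (Iq3_term q (- mu) w (S k)))
         (Cmult (Cpow_pr (Cmult (RtoC q) w) mu) (Iq3_term q (- mu) (Cmult (RtoC q) w) (S k)))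
  = Cmult (RtoC (qdiff_factor q mu)) (Cmult (Cdiv w (RtoC 2))
      (Cmult (Cpow_pr w mu) (Iq3_term q (1 - mu) (Cmult (RtoC (sqrt q)) w) k))).
Proof.
  intros Hw.
  rewrite Cpow_pr_scal, !Iq3_term_scal, (Iq3_term_lower (- mu) w (S k) Hw)
    by (lra || exact Hw || exact Hsqrt).
  unfold Iq3_term.
  replace (- mu - 1 + 2 * INR (S k)) with (1 - mu + 2 * INR k) by (rewrite S_INR; ring).
  set (P := Cpow_pr w mu). set (X := Cpow_pr (Cdiv w (RtoC 2)) (1 - mu + 2 * INR k)).
  transitivity (Cmult (RtoC (Iq3_coef q (- mu) (S k)
                             - Rpower q mu * Iq3_coef q (- mu) (S k)
                               * Rpower q (- mu + 2 * INR (S k))))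
                      (Cmult (Cdiv w (RtoC 2)) (Cmult P X))); [Ceq|].
  rewrite Iq3_coef_opp_qdiff. Ceq.
Qed.

Lemma Iq3_qdiff mu w : slit_plane w ->
  Cminus (Cmult (Cpow_pr w mu) (Iq3 q mu w))
         (Cmult (Cpow_pr (Cmult (RtoC q) w) mu) (Iq3 q mu (Cmult (RtoC q) w)))
  = Cmult (RtoC (qdiff_factor q mu)) (Cmult (Cdiv w (RtoC 2))
      (Cmult (Cpow_pr w mu) (Iq3 q (mu - 1) (Cmult (RtoC (sqrt q)) w)))).
Proof.
  intros Hw. rewrite !Iq3_CSeries.
  rewrite <- !CSeries_scal_l by (repeat apply ex_CSeries_scal_l; apply ex_CSeries_Iq3_term, Hq).
  rewrite <- CSeries_minus by (apply ex_CSeries_scal_l, ex_CSeries_Iq3_term, Hq).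
  apply CSeries_ext. intros k. apply Iq3_term_qdiff, Hw.
Qed.

(* The [k = 0] term of [w^mu I_(-mu)(w)] is [q]-periodic, so the series for [I_(1-mu)] is
   shifted by one. *)
Lemma Iq3_opp_qdiff mu w : slit_plane w ->
  Cminus (Cmult (Cpow_pr w mu) (Iq3 q (- mu) w))
         (Cmult (Cpow_pr (Cmult (RtoC q) w) mu) (Iq3 q (- mu) (Cmult (RtoC q) w)))
  = Cmult (RtoC (qdiff_factor q mu)) (Cmult (Cdiv w (RtoC 2))
      (Cmult (Cpow_pr w mu) (Iq3 q (1 - mu) (Cmult (RtoC (sqrt q)) w)))).
Proof.
  intros Hw. rewrite !Iq3_CSeries.
  rewrite <- !CSeries_scal_l by (repeat apply ex_CSeries_scal_l; apply ex_CSeries_Iq3_term, Hq).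
  rewrite <- CSeries_minus by (apply ex_CSeries_scal_l, ex_CSeries_Iq3_term, Hq).
  rewrite CSeries_incr_1
    by (apply ex_CSeries_minus; apply ex_CSeries_scal_l, ex_CSeries_Iq3_term, Hq).
  rewrite Iq3_term_opp_qdiff_0 by exact Hw.
  rewrite (CSeries_ext _ (fun k => Cmult (RtoC (qdiff_factor q mu)) (Cmult (Cdiv w (RtoC 2))
      (Cmult (Cpow_pr w mu) (Iq3_term q (1 - mu) (Cmult (RtoC (sqrt q)) w) k)))))
    by (intros k; apply Iq3_term_opp_qdiff_S, Hw).
  Ceq.
Qed.

End QDifference.

Definition Kq3_coef (q mu : R) : R :=
  / 2 * Rpower q (- mu ^ 2 + mu) * qGamma (q ^ 2) mu * qGamma (q ^ 2) (1 - mu).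

Lemma Kq3_formula_coef q mu w :
  Kq3_formula q mu w = Cmult (RtoC (Kq3_coef q mu)) (Cminus (Iq3 q (- mu) w) (Iq3 q mu w)).
Proof. reflexivity. Qed.

Lemma Kq3_coef_reflect q mu : Kq3_coef q (1 - mu) = Kq3_coef q mu.
Proof.
  unfold Kq3_coef. replace (1 - (1 - mu)) with mu by ring.
  replace (- (1 - mu) ^ 2 + (1 - mu)) with (- mu ^ 2 + mu) by ring. ring.
Qed.

Definition lowering_lhs (q nu : R) (K : R -> C -> C) (z : C) : C :=
  Cmult (Cdiv (RtoC 2) (Cmult (RtoC (1 + q)) z))
        (qderiv q (fun w => Cmult (Cpow_pr w nu) (K nu w)) z).

Definition lowering_rhs (q nu : R) (K : R -> C -> C) (z : C) : C :=
  Copp (Cmult (RtoC (Rpower q (- ((nu - 1) / 2))))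
              (Cmult (Cpow_pr z (nu - 1)) (K (nu - 1) (Cmult (RtoC (sqrt q)) z)))).

Section KCoefficient.

Variable q : R.
Hypothesis Hq : 0 < q < 1.

Lemma Kq3_coef_pred mu : Kq3_coef q mu = - Kq3_coef q (mu - 1).
Proof.
  pose proof (pow2_open_unit q Hq) as Hsq. unfold Kq3_coef. rewrite !(qGamma_qrgamma _ Hsq).
  replace (1 - (mu - 1)) with (1 - mu + 1) by ring.
  rewrite (qrgamma_S _ Hsq (mu - 1)), (qrgamma_S _ Hsq (1 - mu)).
  replace (mu - 1 + 1) with mu by ring.
  unfold qnum. rewrite !Rpower_sq by lra.
  set (u := Rpower q (2 * (mu - 1))). set (v := Rpower q (2 * (1 - mu))).
  assert (Huv : u * v = 1).
  { unfold u, v. rewrite <- Rpower_plus. replace (2 * (mu - 1) + 2 * (1 - mu)) with 0 by ring.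
    apply Rpower_O. lra. }
  assert (Hu : 0 < u) by apply Rpower_pos, Hq.
  assert (HE : Rpower q (- (mu - 1) ^ 2 + (mu - 1)) = Rpower q (- mu ^ 2 + mu) * u)
    by (unfold u; rewrite <- Rpower_plus; f_equal; ring).
  rewrite HE.
  replace (1 - u) with (- (u * (1 - v))) by (rewrite Rmult_minus_distr_l, Huv; ring).
  unfold Rdiv. rewrite !Rinv_mult, !Rinv_opp, !Rinv_mult, !Rinv_inv.
  set (ia := / qrgamma (q ^ 2) mu). set (ib := / qrgamma (q ^ 2) (1 - mu + 1)).
  set (iv := / (1 - v)).
  field. lra.
Qed.

Lemma Kq3_coef_opp mu : Kq3_coef q (- mu) = - Kq3_coef q mu.
Proof.
  rewrite <- Kq3_coef_reflect, (Kq3_coef_pred (1 - - mu)).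
  replace (1 - - mu - 1) with mu by ring. reflexivity.
Qed.

Lemma Kq3_formula_opp mu w : Kq3_formula q (- mu) w = Kq3_formula q mu w.
Proof. rewrite !Kq3_formula_coef, Kq3_coef_opp, Ropp_involutive. Ceq. Qed.

Lemma Kq3_formula_qdiff mu w : slit_plane w ->
  Cminus (Cmult (Cpow_pr w mu) (Kq3_formula q mu w))
         (Cmult (Cpow_pr (Cmult (RtoC q) w) mu) (Kq3_formula q mu (Cmult (RtoC q) w)))
  = Copp (Cmult (RtoC (qdiff_factor q mu)) (Cmult (Cdiv w (RtoC 2))
      (Cmult (Cpow_pr w mu) (Kq3_formula q (mu - 1) (Cmult (RtoC (sqrt q)) w))))).
Proof.
  intros Hw. rewrite !Kq3_formula_coef.
  set (P := Cpow_pr w mu). set (P' := Cpow_pr (Cmult (RtoC q) w) mu).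
  transitivity (Cmult (RtoC (Kq3_coef q mu))
     (Cminus (Cminus (Cmult P (Iq3 q (- mu) w)) (Cmult P' (Iq3 q (- mu) (Cmult (RtoC q) w))))
             (Cminus (Cmult P (Iq3 q mu w)) (Cmult P' (Iq3 q mu (Cmult (RtoC q) w)))))); [Ceq|].
  unfold P, P'. rewrite Iq3_qdiff, Iq3_opp_qdiff by assumption.
  replace (- (mu - 1)) with (1 - mu) by ring.
  rewrite (Kq3_coef_pred mu). Ceq.
Qed.

Lemma Kq3_formula_lowering mu z : slit_plane z ->
  lowering_lhs q mu (Kq3_formula q) z = lowering_rhs q mu (Kq3_formula q) z.
Proof.
  intros Hz. unfold lowering_lhs, lowering_rhs, qderiv. rewrite Kq3_formula_qdiff by exact Hz.
  replace (Cpow_pr z mu) with (Cmult z (Cpow_pr z (mu - 1)))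
    by (rewrite <- Cpow_pr_plus_1 by exact Hz; f_equal; ring).
  replace (- ((mu - 1) / 2)) with ((1 - mu) / 2) by field.
  unfold qdiff_factor. rewrite Cdiv_2.
  replace (RtoC ((1 - q ^ 2) * Rpower q ((1 - mu) / 2)))
    with (Cmult (Cmult (RtoC (1 + q)) (RtoC (1 - q))) (RtoC (Rpower q ((1 - mu) / 2)))) by Ceq.
  rewrite RtoC_inv by lra.
  pose proof (slit_plane_neq0 z Hz).
  pose proof (RtoC_neq0 (1 + q) ltac:(lra)). pose proof (RtoC_neq0 (1 - q) ltac:(lra)).
  pose proof (RtoC_neq0 2 ltac:(lra)).
  field. repeat split; assumption.
Qed.

End KCoefficient.

(** * Integer order *)

Definition is_int (x : R) : Prop := exists z : Z, x = IZR z.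

Lemma is_int_opp x : is_int x -> is_int (- x).
Proof. intros [z ->]. exists (- z)%Z. symmetry. apply opp_IZR. Qed.

Lemma is_int_plus x y : is_int x -> is_int y -> is_int (x + y).
Proof. intros [a ->] [b ->]. exists (a + b)%Z. symmetry. apply plus_IZR. Qed.

Lemma not_is_int_plus x y : ~ is_int x -> is_int y -> ~ is_int (x + y).
Proof.
  intros Hx Hy Hxy. apply Hx. replace x with (x + y + - y) by ring.
  apply is_int_plus; [exact Hxy | apply is_int_opp, Hy].
Qed.

Lemma is_int_cases x : is_int x -> exists m : nat, x = - INR m \/ x = INR m + 1.
Proof.
  intros [z ->]. destruct (Z.le_gt_cases z 0) as [Hz|Hz].
  - exists (Z.to_nat (- z)). left. rewrite INR_IZR_INZ, Z2Nat.id, opp_IZR by lia. ring.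
  - exists (Z.to_nat (z - 1)). right. rewrite INR_IZR_INZ, Z2Nat.id, minus_IZR by lia. ring.
Qed.

Section IntegerOrder.

Variable q : R.
Hypothesis Hq : 0 < q < 1.

Let Hsq : 0 < q ^ 2 < 1 := pow2_open_unit q Hq.

Lemma qfact_ratio_S j : qfact_ratio q (S j) * qnum (q ^ 2) (INR (S j)) = qfact_ratio q j.
Proof.
  unfold qfact_ratio, qnum. rewrite Rpower_pow by lra.
  pose proof (qpoch_pos _ Hsq (q ^ 2) j ltac:(lra)). pose proof (pow_S_lt_1 _ Hsq j).
  cbn [qpoch pow] in *. field. lra.
Qed.

Lemma qnum_nat_pos j : 0 < qnum (q ^ 2) (INR (S j)).
Proof.
  unfold qnum. rewrite Rpower_pow by lra. pose proof (pow_S_lt_1 _ Hsq j).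
  apply Rdiv_lt_0_compat; lra.
Qed.

Lemma qfact_ratio_qrgamma_shift m k :
  qfact_ratio q (m + k) * qrgamma (q ^ 2) (INR k + 1)
  = qfact_ratio q k * qrgamma (q ^ 2) (INR m + INR k + 1).
Proof.
  induction m as [|m IH]; [cbn [Nat.add INR]; f_equal; f_equal; ring|].
  replace (INR m + INR k + 1) with (INR (S (m + k))) in IH by (rewrite S_INR, plus_INR; ring).
  rewrite (qrgamma_S _ Hsq (INR (S (m + k)))), <- (qfact_ratio_S (m + k)) in IH.
  replace (INR (S (m + k)) + 1) with (INR (S m) + INR k + 1) in IH
    by (rewrite !S_INR, plus_INR; ring).
  pose proof (qnum_nat_pos (m + k)).
  apply Rmult_eq_reg_r with (qnum (q ^ 2) (INR (S (m + k)))); [|lra].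
  cbn [Nat.add]. rewrite Rmult_comm, <- Rmult_assoc, (Rmult_comm _ (qfact_ratio _ _)), IH. ring.
Qed.

Lemma Iq3_term_opp_nat_low m w k : (k < m)%nat -> Iq3_term q (- INR m) w k = RtoC 0.
Proof.
  intros Hk. unfold Iq3_term. rewrite (Iq3_coef_qrgamma q Hq).
  replace (- INR m + INR k + 1) with (- INR (m - k - 1))
    by (rewrite !minus_INR by lia; simpl; ring).
  rewrite (qrgamma_nonpos_int _ Hsq). Ceq.
Qed.

Lemma Iq3_term_opp_nat_high m w k : Iq3_term q (- INR m) w (m + k) = Iq3_term q (INR m) w k.
Proof.
  unfold Iq3_term. rewrite !(Iq3_coef_qrgamma q Hq), plus_INR.
  replace (- INR m + (INR m + INR k) + 1) with (INR k + 1) by ring.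
  replace (- INR m + 2 * (INR m + INR k)) with (INR m + 2 * INR k) by ring.
  replace ((INR m + INR k) * (- INR m + (INR m + INR k))) with (INR k * (INR m + INR k)) by ring.
  rewrite Rmult_assoc, qfact_ratio_qrgamma_shift. Ceq.
Qed.

Lemma Iq3_opp_nat m w : Iq3 q (- INR m) w = Iq3 q (INR m) w.
Proof.
  rewrite !Iq3_CSeries. unfold CSeries.
  rewrite (Series_incr_n_aux (fun k => Re (Iq3_term q (- INR m) w k)) m),
          (Series_incr_n_aux (fun k => Im (Iq3_term q (- INR m) w k)) m).
  - f_equal; apply Series_ext; intros k; rewrite Iq3_term_opp_nat_high; reflexivity.
  - intros k Hk. rewrite Iq3_term_opp_nat_low by exact Hk. reflexivity.
  - intros k Hk. rewrite Iq3_term_opp_nat_low by exact Hk. reflexivity.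
Qed.

Lemma Iq3_opp_int n w : is_int n -> Iq3 q (- n) w = Iq3 q n w.
Proof.
  intros Hn. destruct (is_int_cases n Hn) as [m [-> | ->]].
  - rewrite Ropp_involutive. symmetry. apply Iq3_opp_nat.
  - rewrite <- S_INR. apply Iq3_opp_nat.
Qed.

End IntegerOrder.

Definition qrgamma_refl (p m : R) : R := qrgamma p m * qrgamma p (1 - m).

Definition qrgamma_refl_deriv (p m : R) : R :=
  qrgamma_deriv p m * qrgamma p (1 - m) - qrgamma p m * qrgamma_deriv p (1 - m).

Section Reflection.

Variable p : R.
Hypothesis Hp : 0 < p < 1.

Lemma is_derive_qrgamma_refl m : is_derive (qrgamma_refl p) m (qrgamma_refl_deriv p m).
Proof.
  unfold qrgamma_refl, qrgamma_refl_deriv. auto_derive.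
  - repeat split; eexists; apply (is_derive_qrgamma _ Hp).
  - rewrite !(is_derive_unique _ _ _ (is_derive_qrgamma _ Hp _)).
    match goal with |- ?a = ?b => change (@eq R a b) end. unfold Rminus. ring.
Qed.

(* The analogue of [sin (pi m) / pi]: a simple zero at every integer. *)
Lemma qrgamma_refl_int n : is_int n -> qrgamma_refl p n = 0 /\ qrgamma_refl_deriv p n <> 0.
Proof.
  intros Hn. unfold qrgamma_refl, qrgamma_refl_deriv.
  destruct (is_int_cases n Hn) as [m [-> | ->]].
  - replace (1 - - INR m) with (INR m + 1) by ring.
    rewrite (qrgamma_nonpos_int _ Hp). split; [ring|].
    rewrite Rmult_0_l, Rminus_0_r.
    apply Rmult_integral_contrapositive_currified;
      [apply (qrgamma_deriv_nonpos_int_neq0 _ Hp) | apply (qrgamma_pos_int_neq0 _ Hp)].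
  - replace (1 - (INR m + 1)) with (- INR m) by ring.
    rewrite (qrgamma_nonpos_int _ Hp). split; [ring|].
    rewrite Rmult_0_r, Rminus_0_l. apply Ropp_neq_0_compat.
    apply Rmult_integral_contrapositive_currified;
      [apply (qrgamma_pos_int_neq0 _ Hp) | apply (qrgamma_deriv_nonpos_int_neq0 _ Hp)].
Qed.

End Reflection.

Lemma Kq3_coef_qrgamma_refl q m : 0 < q < 1 ->
  Kq3_coef q m = / 2 * Rpower q (- m ^ 2 + m) * / qrgamma_refl (q ^ 2) m.
Proof.
  intros Hq. unfold Kq3_coef, qrgamma_refl.
  rewrite !(qGamma_qrgamma _ (pow2_open_unit q Hq)), Rinv_mult.
  ring.
Qed.

Lemma is_lim_seq_Ropp (u : nat -> R) (l : R) : is_lim_seq u l -> is_lim_seq (fun n => - u n) (- l).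
Proof. intros H. exact (proj1 (is_lim_seq_opp u l) H). Qed.

Definition Clim (u : nat -> C) (l : C) : Prop :=
  is_lim_seq (fun j => Re (u j)) (Re l) /\ is_lim_seq (fun j => Im (u j)) (Im l).

Lemma Clim_ext u v l : (forall j, u j = v j) -> Clim u l -> Clim v l.
Proof.
  intros H [H1 H2].
  split; eapply is_lim_seq_ext; try eassumption; intros j; simpl; rewrite H; reflexivity.
Qed.

Lemma Clim_unique u a b : Clim u a -> Clim u b -> a = b.
Proof.
  intros [H1 H2] [H3 H4]. apply C_ext.
  - apply is_lim_seq_unique in H1, H3. rewrite H1 in H3. injection H3. auto.
  - apply is_lim_seq_unique in H2, H4. rewrite H2 in H4. injection H4. auto.
Qed.

Lemma Clim_const c : Clim (fun _ => c) c.
Proof. split; apply is_lim_seq_const. Qed.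

Lemma Clim_RtoC (f : nat -> R) (a : R) : is_lim_seq f a -> Clim (fun j => RtoC (f j)) (RtoC a).
Proof. intros H. split; [exact H | apply is_lim_seq_const]. Qed.

Lemma Clim_mult u v a b : Clim u a -> Clim v b -> Clim (fun j => Cmult (u j) (v j)) (Cmult a b).
Proof.
  intros [H1 H2] [H3 H4]. unfold Re, Im in *. split; simpl.
  - apply is_lim_seq_minus'; apply is_lim_seq_mult'; assumption.
  - apply is_lim_seq_plus'; apply is_lim_seq_mult'; assumption.
Qed.

Lemma Clim_opp u a : Clim u a -> Clim (fun j => Copp (u j)) (Copp a).
Proof. intros [H1 H2]. split; apply is_lim_seq_Ropp; assumption. Qed.

Lemma Clim_minus u v a b : Clim u a -> Clim v b -> Clim (fun j => Cminus (u j) (v j)) (Cminus a b).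
Proof.
  intros [H1 H2] [H3 H4]. unfold Re, Im in *. split; simpl;
    apply is_lim_seq_plus'; try apply is_lim_seq_Ropp; assumption.
Qed.

Lemma is_lim_seq_continuous_derivable (g : R -> R) (f : nat -> R) (a : R) :
  (forall x, ex_derive g x) -> is_lim_seq f a -> is_lim_seq (fun j => g (f j)) (g a).
Proof.
  intros Hg Hf. apply is_lim_seq_continuous; [|exact Hf].
  apply continuity_pt_filterlim, (ex_derive_continuous (V := R_NormedModule)), Hg.
Qed.

Lemma is_lim_seq_Rpower r (f : nat -> R) (a : R) :
  0 < r -> is_lim_seq f a -> is_lim_seq (fun j => Rpower r (f j)) (Rpower r a).
Proof.
  intros Hr. apply (is_lim_seq_continuous_derivable (Rpower r)). intros x. unfold Rpower.
  auto_derive. exact I.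
Qed.

Lemma Clim_Cpow_pr z (f : nat -> R) (a : R) :
  is_lim_seq f a -> Clim (fun j => Cpow_pr z (f j)) (Cpow_pr z a).
Proof.
  intros Hf. unfold Cpow_pr, Rpower. split; unfold Re, Im; simpl;
    apply (is_lim_seq_continuous_derivable (fun x => exp (x * ln (Cmod z)) * _ (x * Carg z)));
    try exact Hf; intros x; auto_derive; exact I.
Qed.

Definition inv_succ (j : nat) : R := / (INR j + 1).

Lemma inv_succ_neq0 j : inv_succ j <> 0.
Proof. apply Rinv_neq_0_compat. pose proof (pos_INR j). lra. Qed.

Lemma is_lim_seq_inv_succ : is_lim_seq inv_succ 0.
Proof.
  apply (is_lim_seq_inv _ p_infty); [|discriminate].
  apply (is_lim_seq_le_p_loc INR); [exists 0%nat; intros; lra | apply is_lim_seq_INR].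
Qed.

Lemma is_lim_seq_affine_inv_succ (g : nat -> R) a b :
  (forall j, g j = a * inv_succ j + b) -> is_lim_seq g b.
Proof.
  intros Hg. eapply is_lim_seq_ext; [intros j; symmetry; apply Hg|].
  pose proof (is_lim_seq_plus' _ _ _ _
    (is_lim_seq_mult' _ _ _ _ (is_lim_seq_const a) is_lim_seq_inv_succ) (is_lim_seq_const b)) as H.
  rewrite Rmult_0_r, Rplus_0_l in H. exact H.
Qed.

Section IntegerLimit.

Variable q : R.
Hypothesis Hq : 0 < q < 1.
Variable w : C.

Let Iq3_sum (b : bool) (m : R) : R := Series (fun k => Iq3_part b q w k m).

Lemma Kq3_formula_parts m :
  Re (Kq3_formula q m w) = Kq3_coef q m * (Iq3_sum true (- m) - Iq3_sum true m) /\
  Im (Kq3_formula q m w) = Kq3_coef q m * (Iq3_sum false (- m) - Iq3_sum false m).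
Proof.
  rewrite Kq3_formula_coef. unfold Iq3_sum.
  destruct (Iq3_parts q Hq w (- m)) as [H1 H2]. destruct (Iq3_parts q Hq w m) as [H3 H4].
  unfold Re, Im in *. unfold Cmult, Cminus, Cplus, Copp, RtoC. cbn [fst snd].
  rewrite H1, H2, H3, H4. split; ring.
Qed.

Lemma Iq3_sum_opp_int b n : is_int n -> Iq3_sum b (- n) = Iq3_sum b n.
Proof.
  intros Hn. pose proof (Iq3_opp_int q Hq n w Hn) as Hopp.
  destruct (Iq3_parts q Hq w (- n)) as [H1 H2]. destruct (Iq3_parts q Hq w n) as [H3 H4].
  unfold Iq3_sum.
  destruct b; [rewrite <- H1, <- H3 | rewrite <- H2, <- H4]; rewrite Hopp; reflexivity.
Qed.

(* As [m -> n], both [I_(-m) - I_m] and [1 / (Gamma(m) Gamma(1-m))] vanish to first order, so the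
   limit is a ratio of derivatives. *)
Lemma Kq3_formula_part_int_lim b n : is_int n -> exists L : R, forall e : nat -> R,
  is_lim_seq e 0 -> (forall j, e j <> 0) ->
  is_lim_seq (fun j => Kq3_coef q (n + e j) * (Iq3_sum b (- (n + e j)) - Iq3_sum b (n + e j))) L.
Proof.
  intros Hn. pose proof (pow2_open_unit q Hq) as Hsq.
  destruct (qrgamma_refl_int _ Hsq n Hn) as [Hh0 Hh'].
  set (L1 := Series (fun k => Iq3_part_deriv b q w k (- n))).
  set (L2 := Series (fun k => Iq3_part_deriv b q w k n)).
  exists (/ 2 * Rpower q (- n ^ 2 + n) * (- L1 - L2) * / qrgamma_refl_deriv (q ^ 2) n).
  intros e He Hne.
  assert (Hne' : forall j, - e j <> 0) by (intros j; apply Ropp_neq_0_compat, Hne).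
  assert (He' : is_lim_seq (fun j => - e j) 0)
    by (rewrite <- Ropp_0; apply is_lim_seq_Ropp, He).
  pose proof (is_lim_seq_Iq3_part_difference_quotient q Hq w b (- n) _ He' Hne') as HD1.
  pose proof (is_lim_seq_Iq3_part_difference_quotient q Hq w b n e He Hne) as HD2.
  pose proof (is_lim_seq_difference_quotient _ n _ e (is_derive_qrgamma_refl _ Hsq n) He Hne) as HH.
  apply is_lim_seq_inv in HH; [|intros Heq; injection Heq; exact Hh'].
  assert (HP : is_lim_seq (fun j => Rpower q (- (n + e j) ^ 2 + (n + e j)))
                          (Rpower q (- n ^ 2 + n))).
  { apply is_lim_seq_Rpower; [lra|].
    apply (is_lim_seq_continuous_derivable (fun x => - (n + x) ^ 2 + (n + x)) e 0) in He.
    - replace (- (n + 0) ^ 2 + (n + 0)) with (- n ^ 2 + n) in He by ring. exact He.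
    - intros x. auto_derive. exact I. }
  apply is_lim_seq_ext with
    (fun j => / 2 * Rpower q (- (n + e j) ^ 2 + (n + e j))
       * (- ((Iq3_sum b (- n + - e j) - Iq3_sum b (- n)) / - e j)
          - (Iq3_sum b (n + e j) - Iq3_sum b n) / e j)
       * / ((qrgamma_refl (q ^ 2) (n + e j) - qrgamma_refl (q ^ 2) n) / e j)).
  - intros j. rewrite (Kq3_coef_qrgamma_refl q _ Hq), Hh0, Iq3_sum_opp_int by exact Hn.
    replace (- (n + e j)) with (- n + - e j) by ring.
    pose proof (Hne j). unfold Rdiv. rewrite Rminus_0_r, Rinv_mult, Rinv_inv.
    set (ih := / qrgamma_refl (q ^ 2) (n + e j)). field. exact (Hne j).
  - apply is_lim_seq_mult'; [apply is_lim_seq_mult'; [apply is_lim_seq_mult'|]|].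
    + apply is_lim_seq_const.
    + exact HP.
    + apply is_lim_seq_minus'; [apply is_lim_seq_Ropp|]; assumption.
    + exact HH.
Qed.

End IntegerLimit.

Lemma Kq3_formula_int_lim q n w : 0 < q < 1 -> is_int n -> exists L : C, forall e : nat -> R,
  is_lim_seq e 0 -> (forall j, e j <> 0) -> Clim (fun j => Kq3_formula q (n + e j) w) L.
Proof.
  intros Hq Hn.
  destruct (Kq3_formula_part_int_lim q Hq w true n Hn) as [L1 H1].
  destruct (Kq3_formula_part_int_lim q Hq w false n Hn) as [L2 H2].
  exists (L1, L2). intros e He Hne. split.
  - eapply is_lim_seq_ext; [|exact (H1 e He Hne)].
    intros j. symmetry. apply (Kq3_formula_parts q Hq w).
  - eapply is_lim_seq_ext; [|exact (H2 e He Hne)].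
    intros j. symmetry. apply (Kq3_formula_parts q Hq w).
Qed.

Lemma Int_part_IZR z : Int_part (IZR z) = z.
Proof.
  unfold Int_part. rewrite <- (tech_up (IZR z) (z + 1)); [lia | |]; rewrite plus_IZR; lra.
Qed.

Lemma Kq3_not_int q x w : ~ is_int x -> Kq3 q x w = Kq3_formula q x w.
Proof.
  intros Hx. unfold Kq3. destruct (Req_EM_T x (IZR (Int_part x))) as [E|E]; [|reflexivity].
  exfalso. apply Hx. exists (Int_part x). exact E.
Qed.

(* Coquelicot's [Lim f x] samples [f] along [x + 1 / (j + 1)]. *)
Lemma Kq3_int_lim q n w e : 0 < q < 1 -> is_int n -> is_lim_seq e 0 -> (forall j, e j <> 0) ->
  Clim (fun j => Kq3_formula q (n + e j) w) (Kq3 q n w).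
Proof.
  intros Hq Hn He Hne. destruct (Kq3_formula_int_lim q n w Hq Hn) as [L HL].
  replace (Kq3 q n w) with L; [exact (HL e He Hne)|].
  destruct (HL inv_succ is_lim_seq_inv_succ inv_succ_neq0) as [H1 H2].
  unfold Kq3. destruct (Req_EM_T n (IZR (Int_part n))) as [E|E].
  - unfold Lim. cbn [Rbar_loc_seq]. unfold inv_succ in H1, H2.
    rewrite (is_lim_seq_unique _ _ H1), (is_lim_seq_unique _ _ H2). destruct L. reflexivity.
  - exfalso. apply E. destruct Hn as [z ->]. rewrite Int_part_IZR. reflexivity.
Qed.

Lemma Kq3_opp q nu w : 0 < q < 1 -> Kq3 q (- nu) w = Kq3 q nu w.
Proof.
  intros Hq. destruct (classic (is_int nu)) as [Hn|Hn].
  - assert (He : is_lim_seq (fun j => - inv_succ j) 0)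
      by (rewrite <- Ropp_0; apply is_lim_seq_Ropp, is_lim_seq_inv_succ).
    assert (Hne : forall j, - inv_succ j <> 0)
      by (intros j; apply Ropp_neq_0_compat, inv_succ_neq0).
    apply (Clim_unique (fun j => Kq3_formula q (nu + - inv_succ j) w)).
    + apply (Clim_ext (fun j => Kq3_formula q (- nu + inv_succ j) w)).
      * intros j. rewrite <- (Kq3_formula_opp q Hq). f_equal. ring.
      * apply (Kq3_int_lim q);
          [exact Hq | apply is_int_opp, Hn | apply is_lim_seq_inv_succ | apply inv_succ_neq0].
    + apply (Kq3_int_lim q); assumption.
  - rewrite !Kq3_not_int, (Kq3_formula_opp q Hq); [reflexivity | exact Hn |].
    intros Hopp. apply Hn. rewrite <- (Ropp_involutive nu). apply is_int_opp, Hopp.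
Qed.

Lemma Kq3_lowering_int q nu z : 0 < q < 1 -> slit_plane z -> is_int nu ->
  lowering_lhs q nu (Kq3 q) z = lowering_rhs q nu (Kq3 q) z.
Proof.
  intros Hq Hz Hn. set (mu := fun j => nu + inv_succ j).
  assert (Hmu : forall c, is_lim_seq (fun j => mu j + c) (nu + c))
    by (intros c; apply (is_lim_seq_affine_inv_succ _ 1); intros j; unfold mu; ring).
  assert (HK : forall w, Clim (fun j => Kq3_formula q (mu j) w) (Kq3 q nu w))
    by (intros w; apply Kq3_int_lim; [exact Hq | exact Hn | apply is_lim_seq_inv_succ
                                       | apply inv_succ_neq0]).
  assert (HK1 : forall w, Clim (fun j => Kq3_formula q (mu j - 1) w) (Kq3 q (nu - 1) w)).
  { intros w. apply (Clim_ext (fun j => Kq3_formula q (nu - 1 + inv_succ j) w)).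
    - intros j. unfold mu. f_equal. ring.
    - apply Kq3_int_lim; [exact Hq | apply is_int_plus; [exact Hn | exists (-1)%Z; reflexivity]
                         | apply is_lim_seq_inv_succ | apply inv_succ_neq0]. }
  apply (Clim_unique (fun j => lowering_lhs q (mu j) (Kq3_formula q) z)).
  - unfold lowering_lhs, qderiv, Cdiv.
    apply Clim_mult; [apply Clim_const|]. apply Clim_mult; [|apply Clim_const].
    apply Clim_minus; apply Clim_mult; try apply HK; apply Clim_Cpow_pr;
      rewrite <- (Rplus_0_r nu); apply (is_lim_seq_ext (fun j => mu j + 0)); auto;
      intros; apply Rplus_0_r.
  - apply (Clim_ext (fun j => lowering_rhs q (mu j) (Kq3_formula q) z)).
    { intros j. symmetry. apply (Kq3_formula_lowering q Hq _ _ Hz). }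
    unfold lowering_rhs. apply Clim_opp, Clim_mult; [|apply Clim_mult; [|apply HK1]].
    + apply Clim_RtoC, is_lim_seq_Rpower; [lra|].
      apply (is_lim_seq_affine_inv_succ _ (- / 2)). intros; unfold mu; field.
    + apply Clim_Cpow_pr, (Hmu (-1)).
Qed.

Lemma Kq3_lowering q nu z : 0 < q < 1 -> slit_plane z ->
  lowering_lhs q nu (Kq3 q) z = lowering_rhs q nu (Kq3 q) z.
Proof.
  intros Hq Hz. destruct (classic (is_int nu)) as [Hn|Hn]; [apply Kq3_lowering_int; assumption|].
  assert (Hn' : ~ is_int (nu - 1))
    by (apply not_is_int_plus; [exact Hn | exists (-1)%Z; reflexivity]).
  unfold lowering_lhs, lowering_rhs, qderiv.
  rewrite !(Kq3_not_int q nu), (Kq3_not_int q (nu - 1)) by assumption.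
  apply (Kq3_formula_lowering q Hq _ _ Hz).
Qed.

Theorem proposition3p1 (q nu : R) (z : C) :
  0 < q < 1 -> slit_plane z ->
  Cmult (Cdiv (RtoC 2) (Cmult (RtoC (1 + q)) z))
        (qderiv q (fun w => Cmult (Cpow_pr w nu) (Kq3 q nu w)) z)
  = Copp (Cmult (RtoC (Rpower q (- ((nu - 1) / 2))))
                (Cmult (Cpow_pr z (nu - 1)) (Kq3 q (nu - 1) (Cmult (RtoC (sqrt q)) z))))
  /\
  Cmult (Cdiv (RtoC 2) (Cmult (RtoC (1 + q)) z))
        (qderiv q (fun w => Cmult (Cpow_pr w (- nu)) (Kq3 q nu w)) z)
  = Copp (Cmult (RtoC (Rpower q ((nu + 1) / 2)))
                (Cmult (Cpow_pr z (- nu - 1)) (Kq3 q (nu + 1) (Cmult (RtoC (sqrt q)) z)))).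
Proof.
  intros Hq Hz. split; [exact (Kq3_lowering q nu z Hq Hz)|].
  pose proof (Kq3_lowering q (- nu) z Hq Hz) as Hlow.
  unfold lowering_lhs, lowering_rhs, qderiv in *. cbv beta in *.
  rewrite <- !(Kq3_opp q nu _ Hq), <- (Kq3_opp q (nu + 1) _ Hq).
  replace ((nu + 1) / 2) with (- ((- nu - 1) / 2)) by field.
  replace (- (nu + 1)) with (- nu - 1) by ring.
  exact Hlow.
Qed.
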